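(* Let $n\ge 237$ be an integer. Then there exists a really perverse relative equilibrium of the Newtonian planar $(1+2n)$-body problem whose configuration consists of a central mass at the origin surrounded by two regular $n$-gons sharing the same symmetry axes and shifted by the angle $\pi/n$, i.e. with vertices $\rho_1 e^{i(2\pi l/n+\pi/n)}$ and $\rho_2 e^{2\pi i l/n}$, $l=0,\dots,n-1$, for some radii $0<\rho_1\le \rho_2$.
   Context: The Newtonian planar $N$-body problem (gravitational constant $1$): bodies with masses $\mu_i>0$ at positions $r_i\in\mathbb{C}$ satisfy $\mu_i\ddot r_i=\sum_{j\ne i}\mu_i\mu_j\,\frac{r_j-r_i}{|r_j-r_i|^3}$. A relative equilibrium (angular velocity $1$) of a configuration $(r_1,\dots,r_N)$ is the motion $r_i(t)=r_ie^{it}$ when it is a solution. For the configuration above, a mass system is a vector $(m_0,m_1,m_2)$ of positive numbers: mass $m_0$ at the center, mass $m_j$ at every vertex of the $j$-th polygon; its total mass is $m_0+n(m_1+m_2)$ and its center of mass is the origin. The relative equilibrium is really perverse if there exist two distinct mass systems with the same total mass and the same center of mass for each of which $r_i(t)=r_ie^{it}$ is a solution. *)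

From Stdlib Require Import Reals Arith.
From Coquelicot Require Import Coquelicot.
Open Scope R_scope.

Definition newton_rhs (N : nat) (mu : nat -> R) (r : nat -> C) (i : nat) : C :=
  sum_n (fun j => if Nat.eqb j i then RtoC 0
                  else Cmult (RtoC (mu i * mu j / (Cmod (Cminus (r j) (r i))) ^ 3))
                             (Cminus (r j) (r i))) (N - 1).

Definition is_nbody_solution (N : nat) (mu : nat -> R) (r : nat -> R -> C) : Prop :=
  exists v a : nat -> R -> C,
    forall i, (i < N)%nat -> forall t : R,
      is_derive (r i) t (v i t) /\ is_derive (v i) t (a i t) /\
      Cmult (RtoC (mu i)) (a i t) = newton_rhs N mu (fun j => r j t) i.

Definition rel_eq_motion (x : nat -> C) : nat -> R -> C :=
  fun k t => Cmult (x k) (cos t, sin t).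

Definition two_ngon_config (n : nat) (rho1 rho2 : R) (k : nat) : C :=
  if Nat.eqb k 0 then RtoC 0
  else if Nat.leb k n then
    let th := 2 * PI * INR (k - 1) / INR n + PI / INR n in
    (rho1 * cos th, rho1 * sin th)
  else
    let th := 2 * PI * INR (k - 1 - n) / INR n in
    (rho2 * cos th, rho2 * sin th).

Definition mass_of_system (n : nat) (m : R * R * R) (k : nat) : R :=
  let '(m0, m1, m2) := m in
  if Nat.eqb k 0 then m0 else if Nat.leb k n then m1 else m2.

Definition positive_system (m : R * R * R) : Prop :=
  let '(m0, m1, m2) := m in 0 < m0 /\ 0 < m1 /\ 0 < m2.

Definition total_mass (n : nat) (m : R * R * R) : R :=
  let '(m0, m1, m2) := m in m0 + INR n * (m1 + m2).

Definition mass_moment (N : nat) (mu : nat -> R) (x : nat -> C) : C :=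
  sum_n (fun k => Cmult (RtoC (mu k)) (x k)) (N - 1).

Definition really_perverse (n : nat) (x : nat -> C) : Prop :=
  exists m m' : R * R * R,
    m <> m' /\ positive_system m /\ positive_system m' /\
    total_mass n m = total_mass n m' /\
    mass_moment (1 + 2 * n) (mass_of_system n m) x = RtoC 0 /\
    mass_moment (1 + 2 * n) (mass_of_system n m') x = RtoC 0 /\
    is_nbody_solution (1 + 2 * n) (mass_of_system n m) (rel_eq_motion x) /\
    is_nbody_solution (1 + 2 * n) (mass_of_system n m') (rel_eq_motion x).

(* Put the outer polygon on the unit circle and the inner one at radius [r].  By the
   dihedral symmetry, Newton's equations for the rotating configuration reduce to the
   radial force balance of one body per polygon, two equations linear in the masses:
     m0 + S m1 + r^2 U(r) m2 = r^3,      m0 + W(r) m1 + S m2 = 1,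
   where [S = self_sum n], [U = inner_sum n], [W = outer_sum n].  Their solutions form a
   line of mass systems along which the total mass is constant exactly when
   F(r) = (n - S)^2 - (r^2 U - n) (W - n) vanishes, and then a whole segment of the line
   consists of positive mass systems.  With [T = shifted_self_sum n], U(1) = W(1) = T, so
   F(1) = -(T - S)(S + T - 2n) < 0 once S + T > 2n; comparing [1 / sin] with its Laurent
   polynomial gives S + T >= (n / pi) H_(n-1) + 0.0768 n, which exceeds 2n when
   H_(n-1) >= H_236 > 6.0431: this is where n >= 237 comes from.  Slightly inside the
   apothem cos(pi/n) of the outer polygon the two nearest outer vertices make U negative,
   so F > 0 there, and the intermediate value theorem gives the radius. *)

From Stdlib Require Import Reals Arith ZArith Lra Lia QArith Qreals Machin Ranalysis5.
From Coquelicot Require Import Coquelicot.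
Open Scope R_scope.

(* [rsum f k] is the sum of the [k] terms [f 0, ..., f (k - 1)]; Coquelicot's [sum_n f N]
   has [N + 1] terms, which would put an index shift on every polygon sum. *)
Fixpoint rsum (f : nat -> R) (k : nat) : R :=
  match k with O => 0 | S k' => rsum f k' + f k' end.

Lemma rsum_ext f g k : (forall l, (l < k)%nat -> f l = g l) -> rsum f k = rsum g k.
Proof.
  induction k as [|k IH]; intros H; simpl; auto.
  rewrite IH by (intros; apply H; lia). rewrite H by lia. reflexivity.
Qed.

Lemma rsum_plus f g k : rsum (fun l => f l + g l) k = rsum f k + rsum g k.
Proof. induction k; simpl; [ring | rewrite IHk; ring]. Qed.

Lemma rsum_minus f g k : rsum (fun l => f l - g l) k = rsum f k - rsum g k.
Proof. induction k; simpl; [ring | rewrite IHk; ring]. Qed.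

Lemma rsum_scal_l c f k : rsum (fun l => c * f l) k = c * rsum f k.
Proof. induction k; simpl; [ring | rewrite IHk; ring]. Qed.

Lemma rsum_opp f k : rsum (fun l => - f l) k = - rsum f k.
Proof. induction k; simpl; [ring | rewrite IHk; ring]. Qed.

Lemma rsum_const c k : rsum (fun _ => c) k = INR k * c.
Proof. induction k; simpl rsum; [simpl; ring | rewrite IHk, S_INR; ring]. Qed.

Lemma rsum_split f a b : rsum f (a + b) = rsum f a + rsum (fun l => f (a + l)%nat) b.
Proof.
  induction b as [|b IH]; simpl.
  - rewrite Nat.add_0_r; ring.
  - rewrite Nat.add_succ_r; simpl; rewrite IH; ring.
Qed.

Lemma rsum_succ_l f k : rsum f (S k) = f O + rsum (fun l => f (S l)) k.
Proof. change (S k) with (1 + k)%nat. rewrite rsum_split. simpl. ring. Qed.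

Lemma rsum_le f g k : (forall l, (l < k)%nat -> f l <= g l) -> rsum f k <= rsum g k.
Proof.
  induction k as [|k IH]; intros H; simpl; [lra |].
  pose proof (H k (Nat.lt_succ_diag_r k)).
  assert (rsum f k <= rsum g k) by (apply IH; intros; apply H; lia). lra.
Qed.

Lemma rsum_nonneg f k : (forall l, (l < k)%nat -> 0 <= f l) -> 0 <= rsum f k.
Proof.
  intros H. rewrite <- (Rmult_0_r (INR k)), <- rsum_const. now apply rsum_le.
Qed.

Lemma rsum_rev f k : rsum (fun l => f (k - 1 - l)%nat) k = rsum f k.
Proof.
  induction k as [|k IH]; [reflexivity |].
  rewrite rsum_succ_l. simpl rsum at 2. rewrite <- IH, Rplus_comm.
  replace (S k - 1 - 0)%nat with k by lia. f_equal.
  apply rsum_ext. intros l Hl. f_equal. lia.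
Qed.

Lemma rsum_even_odd f k :
  rsum f (2 * k) = rsum (fun l => f (2 * l)%nat) k + rsum (fun l => f (2 * l + 1)%nat) k.
Proof.
  induction k as [|k IH]; [simpl; ring |].
  replace (2 * S k)%nat with (S (S (2 * k))) by lia.
  change (rsum f (S (S (2 * k)))) with (rsum f (2 * k) + f (2 * k)%nat + f (S (2 * k))).
  rewrite IH. cbn [rsum]. replace (2 * k + 1)%nat with (S (2 * k)) by lia. ring.
Qed.

Lemma sum_n_complex (f : nat -> C) (N : nat) :
  sum_n f N = (rsum (fun j => fst (f j)) (S N), rsum (fun j => snd (f j)) (S N)).
Proof.
  induction N as [|N IH].
  - rewrite sum_O. simpl. destruct (f O); simpl. f_equal; ring.
  - rewrite sum_Sn, IH. reflexivity.
Qed.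

(** * Sums over the vertices of a regular polygon *)

Definition polygon_sum (n : nat) (f : R -> R) (b : R) : R :=
  rsum (fun l => f (2 * PI * INR l / INR n + b)) n.

Definition periodic (f : R -> R) : Prop := forall x, f (x + 2 * PI) = f x.

Lemma cos_plus_2PI x : cos (x + 2 * PI) = cos x.
Proof. rewrite cos_plus, cos_2PI, sin_2PI; ring. Qed.

Lemma sin_plus_2PI x : sin (x + 2 * PI) = sin x.
Proof. rewrite sin_plus, cos_2PI, sin_2PI; ring. Qed.

Lemma polygon_sum_ext n f g b : (forall x, f x = g x) -> polygon_sum n f b = polygon_sum n g b.
Proof. intros H. apply rsum_ext. intros; apply H. Qed.

Lemma polygon_sum_scal_l n c f b : polygon_sum n (fun x => c * f x) b = c * polygon_sum n f b.
Proof. apply rsum_scal_l. Qed.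

Lemma polygon_sum_opp n f b : polygon_sum n (fun x => - f x) b = - polygon_sum n f b.
Proof. apply rsum_opp. Qed.

Lemma polygon_sum_rotate n f b : (0 < n)%nat -> periodic f ->
  polygon_sum n f (b + 2 * PI / INR n) = polygon_sum n f b.
Proof.
  intros Hn Hf. assert (Hn' : INR n <> 0) by (apply not_0_INR; lia).
  unfold polygon_sum. set (g := fun l => f (2 * PI * INR l / INR n + b)).
  transitivity (rsum (fun l => g (S l)) n).
  { apply rsum_ext; intros l _. unfold g. f_equal. rewrite S_INR. field. auto. }
  assert (Hlast : g n = g O).
  { unfold g. replace (2 * PI * INR n / INR n + b) with (b + 2 * PI) by (field; auto).
    rewrite Hf. f_equal. simpl. field. auto. }
  pose proof (rsum_succ_l g n) as E. simpl in E. lra.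
Qed.

Lemma polygon_sum_rotate_by n f b k : (0 < n)%nat -> periodic f ->
  polygon_sum n f (b - 2 * PI * INR k / INR n) = polygon_sum n f b.
Proof.
  intros Hn Hf. assert (Hn' : INR n <> 0) by (apply not_0_INR; lia).
  induction k as [|k IH].
  - f_equal. simpl. field. auto.
  - rewrite <- IH, <- (polygon_sum_rotate n f (b - 2 * PI * INR (S k) / INR n)) by auto.
    f_equal. rewrite S_INR. field. auto.
Qed.

Lemma polygon_sum_reflect n f b : (0 < n)%nat -> periodic f -> (forall x, f (- x) = - f x) ->
  polygon_sum n f b = - polygon_sum n f (2 * PI / INR n - b).
Proof.
  intros Hn Hf Hodd. assert (Hn' : INR n <> 0) by (apply not_0_INR; lia).
  unfold polygon_sum. rewrite <- rsum_rev, <- rsum_opp.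
  apply rsum_ext. intros l Hl.
  rewrite !minus_INR by lia. simpl INR.
  replace (2 * PI * (INR n - 1 - INR l) / INR n + b) with
      (- (2 * PI * INR l / INR n + (2 * PI / INR n - b)) + 2 * PI) by (field; auto).
  rewrite Hf, Hodd. reflexivity.
Qed.

Lemma polygon_sum_odd_rotate n f c k : (0 < n)%nat -> periodic f -> (forall x, f (- x) = - f x) ->
  c = 0 \/ c = PI / INR n -> polygon_sum n f (c - 2 * PI * INR k / INR n) = 0.
Proof.
  intros Hn Hf Hodd Hc. assert (Hn' : INR n <> 0) by (apply not_0_INR; lia).
  rewrite polygon_sum_rotate_by by auto.
  pose proof (polygon_sum_reflect n f c Hn Hf Hodd) as E.
  destruct Hc as [-> | ->].
  - replace (2 * PI / INR n - 0) with (0 + 2 * PI / INR n) in E by ring.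
    rewrite polygon_sum_rotate in E by auto. lra.
  - replace (2 * PI / INR n - PI / INR n) with (PI / INR n) in E by (field; auto). lra.
Qed.

Lemma cos_lt_1 x : 0 < x < 2 * PI -> cos x < 1.
Proof.
  intros Hx. replace x with (2 * (x / 2)) by field. rewrite cos_2a_sin.
  assert (0 < sin (x / 2)) by (apply sin_gt_0; lra). nra.
Qed.

(* The sums [X] of cosines and [Y] of sines are invariant under rotation by [c = 2 pi/n],
   i.e. [(1 - e^{ic}) (X + iY) = 0], and [e^{ic} <> 1]. *)
Lemma polygon_sum_cos_sin n b : (2 <= n)%nat -> polygon_sum n cos b = 0 /\ polygon_sum n sin b = 0.
Proof.
  intros Hn. assert (Hn0 : (0 < n)%nat) by lia.
  assert (Hn' : INR n <> 0) by (apply not_0_INR; lia).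
  set (c := 2 * PI / INR n).
  assert (Ecos : polygon_sum n cos (b + c) = cos c * polygon_sum n cos b - sin c * polygon_sum n sin b).
  { unfold polygon_sum. rewrite <- !rsum_scal_l, <- rsum_minus. apply rsum_ext; intros.
    rewrite <- Rplus_assoc, cos_plus. ring. }
  assert (Esin : polygon_sum n sin (b + c) = sin c * polygon_sum n cos b + cos c * polygon_sum n sin b).
  { unfold polygon_sum. rewrite <- !rsum_scal_l, <- rsum_plus. apply rsum_ext; intros.
    rewrite <- Rplus_assoc, sin_plus. ring. }
  unfold c in Ecos, Esin. rewrite polygon_sum_rotate in Ecos, Esin by (auto; exact cos_plus_2PI || exact sin_plus_2PI).
  fold c in Ecos, Esin.
  assert (Hc : cos c < 1).
  { apply cos_lt_1. unfold c. pose proof PI_RGT_0.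
    assert (2 <= INR n) by (apply (le_INR 2); auto).
    split; [apply Rdiv_lt_0_compat; lra |].
    apply (Rmult_lt_reg_r (INR n)); [lra |]. field_simplify; nra. }
  set (X := polygon_sum n cos b) in *. set (Y := polygon_sum n sin b) in *.
  assert (A1 : X * (1 - cos c) = - sin c * Y) by lra.
  assert (A2 : Y * (1 - cos c) = sin c * X) by lra.
  assert (HX : X * ((1 - cos c) ^ 2 + sin c ^ 2) = 0).
  { transitivity ((X * (1 - cos c)) * (1 - cos c) + sin c * (sin c * X)); [ring |].
    rewrite A1, <- A2. ring. }
  assert (HY : Y * ((1 - cos c) ^ 2 + sin c ^ 2) = 0).
  { transitivity ((Y * (1 - cos c)) * (1 - cos c) - sin c * (- sin c * Y)); [ring |].
    rewrite A2, <- A1. ring. }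
  assert (0 < (1 - cos c) ^ 2 + sin c ^ 2) by nra.
  split; [destruct (Rmult_integral _ _ HX) | destruct (Rmult_integral _ _ HY)]; auto; lra.
Qed.

(** * Newton's equations in the rotating frame *)

Definition pair_dist (p q th : R) : R := sqrt (p ^ 2 + q ^ 2 - 2 * p * q * cos th).

(* Components along [e^{ia}] and [i e^{ia}] of [(z - w) / |z - w|^3] for
   [w = p e^{ia}] and [z = q e^{i(a + th)}]. *)
Definition radial_pull (p q th : R) : R := (q * cos th - p) / pair_dist p q th ^ 3.
Definition tangential_pull (p q th : R) : R := q * sin th / pair_dist p q th ^ 3.

Lemma radial_pull_periodic p q : periodic (radial_pull p q).
Proof. intros x. unfold radial_pull, pair_dist. now rewrite cos_plus_2PI. Qed.

Lemma tangential_pull_periodic p q : periodic (tangential_pull p q).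
Proof. intros x. unfold tangential_pull, pair_dist. now rewrite cos_plus_2PI, sin_plus_2PI. Qed.

Lemma tangential_pull_odd p q x : tangential_pull p q (- x) = - tangential_pull p q x.
Proof. unfold tangential_pull, pair_dist. rewrite cos_neg, sin_neg. unfold Rdiv. ring. Qed.

Lemma newton_term_polar K p a q b :
  Cmult (RtoC (K / Cmod (Cminus (q * cos b, q * sin b) (p * cos a, p * sin a)) ^ 3))
        (Cminus (q * cos b, q * sin b) (p * cos a, p * sin a))
  = Cmult (cos a, sin a) (K * radial_pull p q (b - a), K * tangential_pull p q (b - a)).
Proof.
  pose proof (sin2_cos2 a) as Ha. pose proof (sin2_cos2 b). unfold Rsqr in *.
  assert (Hd : Cmod (Cminus (q * cos b, q * sin b) (p * cos a, p * sin a)) = pair_dist p q (b - a)).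
  { unfold Cmod, Cminus, Cplus, Copp, pair_dist; simpl. f_equal. rewrite cos_minus. nra. }
  rewrite Hd. unfold radial_pull, tangential_pull, Rdiv.
  set (V := / pair_dist p q (b - a) ^ 3).
  unfold Cmult, Cminus, Cplus, Copp, RtoC; simpl. rewrite cos_minus, sin_minus.
  f_equal.
  - transitivity (K * V * (q * cos b * (sin a * sin a + cos a * cos a) - p * cos a)); [rewrite Ha |]; ring.
  - transitivity (K * V * (q * sin b * (sin a * sin a + cos a * cos a) - p * sin a)); [rewrite Ha |]; ring.
Qed.

Definition body_radius (n : nat) (r : R) (k : nat) : R :=
  if Nat.eqb k 0 then 0 else if Nat.leb k n then r else 1.

Definition body_angle (n : nat) (k : nat) : R :=
  if Nat.eqb k 0 then 0
  else if Nat.leb k n then 2 * PI * INR (k - 1) / INR n + PI / INR n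
  else 2 * PI * INR (k - 1 - n) / INR n.

Lemma two_ngon_config_polar n r k :
  two_ngon_config n r 1 k = (body_radius n r k * cos (body_angle n k), body_radius n r k * sin (body_angle n k)).
Proof.
  unfold two_ngon_config, body_radius, body_angle.
  destruct (Nat.eqb k 0); [unfold RtoC; f_equal; ring |].
  now destruct (Nat.leb k n).
Qed.

Lemma radius_inner n r l : (l < n)%nat -> body_radius n r (1 + l) = r.
Proof. intros H. unfold body_radius. destruct (Nat.leb_spec (1 + l) n); [reflexivity | lia]. Qed.

Lemma radius_outer n r l : body_radius n r (1 + n + l) = 1.
Proof. unfold body_radius. destruct (Nat.leb_spec (1 + n + l) n); [lia | reflexivity]. Qed.

Lemma angle_inner n l : (l < n)%nat -> body_angle n (1 + l) = 2 * PI * INR l / INR n + PI / INR n.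
Proof.
  intros H. unfold body_angle. destruct (Nat.leb_spec (1 + l) n); [| lia].
  simpl. now rewrite Nat.sub_0_r.
Qed.

Lemma angle_outer n l : body_angle n (1 + n + l) = 2 * PI * INR l / INR n.
Proof.
  unfold body_angle. destruct (Nat.leb_spec (1 + n + l) n); [lia |].
  simpl. now replace (n + l - 0 - n)%nat with l by lia.
Qed.

Lemma mass_inner n m0 m1 m2 l : (l < n)%nat -> mass_of_system n (m0, m1, m2) (1 + l) = m1.
Proof. intros H. unfold mass_of_system. destruct (Nat.leb_spec (1 + l) n); [reflexivity | lia]. Qed.

Lemma mass_outer n m0 m1 m2 l : mass_of_system n (m0, m1, m2) (1 + n + l) = m2.
Proof. unfold mass_of_system. destruct (Nat.leb_spec (1 + n + l) n); [lia | reflexivity]. Qed.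

Lemma rsum_bodies f n :
  rsum f (S (2 * n)) = f O + rsum (fun l => f (1 + l)%nat) n + rsum (fun l => f (1 + n + l)%nat) n.
Proof. replace (S (2 * n)) with (1 + n + n)%nat by lia. rewrite !rsum_split. simpl. ring. Qed.

Definition interaction (g : R -> R -> R -> R) (n : nat) (r : R) (mu : nat -> R) (i j : nat) : R :=
  mu i * mu j * g (body_radius n r i) (body_radius n r j) (body_angle n j - body_angle n i).

Lemma newton_rhs_polar n r mu t i :
  newton_rhs (1 + 2 * n) mu (fun j => rel_eq_motion (two_ngon_config n r 1) j t) i
  = Cmult (cos (body_angle n i + t), sin (body_angle n i + t))
          (rsum (interaction radial_pull n r mu i) (S (2 * n)),
           rsum (interaction tangential_pull n r mu i) (S (2 * n))).
Proof.
  assert (Hrot : forall k, rel_eq_motion (two_ngon_config n r 1) k t =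
    (body_radius n r k * cos (body_angle n k + t), body_radius n r k * sin (body_angle n k + t))).
  { intros k. unfold rel_eq_motion. rewrite two_ngon_config_polar.
    unfold Cmult; simpl. rewrite cos_plus, sin_plus. f_equal; ring. }
  unfold newton_rhs. replace (1 + 2 * n - 1)%nat with (2 * n)%nat by lia.
  rewrite (sum_n_ext _ (fun j => Cmult (cos (body_angle n i + t), sin (body_angle n i + t))
                                       (interaction radial_pull n r mu i j,
                                        interaction tangential_pull n r mu i j))).
  - rewrite sum_n_complex. unfold Cmult; cbn [fst snd].
    rewrite rsum_minus, rsum_plus, !rsum_scal_l. reflexivity.
  - intros j. destruct (Nat.eqb_spec j i) as [-> | _].
    + unfold interaction, radial_pull, tangential_pull.
      rewrite Rminus_diag, cos_0, sin_0. unfold Cmult, RtoC; simpl. f_equal; unfold Rdiv; ring.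
    + rewrite !Hrot, newton_term_polar. unfold interaction.
      now replace (body_angle n j + t - (body_angle n i + t)) with (body_angle n j - body_angle n i) by ring.
Qed.

Lemma interaction_sum g n r m0 m1 m2 i :
  rsum (interaction g n r (mass_of_system n (m0, m1, m2)) i) (S (2 * n)) =
  mass_of_system n (m0, m1, m2) i *
    (m0 * g (body_radius n r i) 0 (0 - body_angle n i)
     + m1 * polygon_sum n (g (body_radius n r i) r) (PI / INR n - body_angle n i)
     + m2 * polygon_sum n (g (body_radius n r i) 1) (0 - body_angle n i)).
Proof.
  rewrite rsum_bodies. unfold polygon_sum.
  rewrite (rsum_ext _ (fun l => mass_of_system n (m0, m1, m2) i * m1 * g (body_radius n r i) r
                         (2 * PI * INR l / INR n + (PI / INR n - body_angle n i)))).
  2: { intros l Hl. unfold interaction. rewrite radius_inner, angle_inner, mass_inner by auto.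
       do 2 f_equal. ring. }
  rewrite (rsum_ext (fun l => interaction g n r _ i (1 + n + l))
             (fun l => mass_of_system n (m0, m1, m2) i * m2 * g (body_radius n r i) 1
                         (2 * PI * INR l / INR n + (0 - body_angle n i)))).
  2: { intros l _. unfold interaction. rewrite radius_outer, angle_outer, mass_outer.
       do 2 f_equal. ring. }
  rewrite !rsum_scal_l. unfold interaction.
  change (body_radius n r 0) with 0. change (body_angle n 0) with 0.
  change (mass_of_system n (m0, m1, m2) 0) with m0. ring.
Qed.

Definition self_kernel (c : R) : R := (1 - c) / sqrt (2 - 2 * c) ^ 3.
Definition inner_kernel (r c : R) : R := (r - c) / sqrt (1 + r ^ 2 - 2 * r * c) ^ 3.
Definition outer_kernel (r c : R) : R := (1 - r * c) / sqrt (1 + r ^ 2 - 2 * r * c) ^ 3.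

(* In [self_sum] the vertex [l = 0], i.e. the body itself, contributes [self_kernel 1 = 0 / 0],
   which is [0] in Rocq's reals. *)
Definition self_sum (n : nat) : R := polygon_sum n (fun x => self_kernel (cos x)) 0.
Definition shifted_self_sum (n : nat) : R := polygon_sum n (fun x => self_kernel (cos x)) (PI / INR n).
Definition inner_sum (n : nat) (r : R) : R := polygon_sum n (fun x => inner_kernel r (cos x)) (PI / INR n).
Definition outer_sum (n : nat) (r : R) : R := polygon_sum n (fun x => outer_kernel r (cos x)) (PI / INR n).

Lemma radial_pull_self r : 0 < r -> forall x, radial_pull r r x = - / r ^ 2 * self_kernel (cos x).
Proof.
  intros Hr x. unfold radial_pull, pair_dist, self_kernel.
  assert (0 <= 2 - 2 * cos x) by (pose proof (COS_bound x); lra).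
  replace (r ^ 2 + r ^ 2 - 2 * r * r * cos x) with (r ^ 2 * (2 - 2 * cos x)) by ring.
  rewrite sqrt_mult, sqrt_pow2 by (try apply pow2_ge_0; lra).
  unfold Rdiv. rewrite Rpow_mult_distr, Rinv_mult.
  set (V := / sqrt (2 - 2 * cos x) ^ 3). field. lra.
Qed.

Lemma radial_pull_inner r x : radial_pull r 1 x = - inner_kernel r (cos x).
Proof.
  unfold radial_pull, pair_dist, inner_kernel.
  replace (r ^ 2 + 1 ^ 2 - 2 * r * 1 * cos x) with (1 + r ^ 2 - 2 * r * cos x) by ring.
  unfold Rdiv. ring.
Qed.

Lemma radial_pull_outer r x : radial_pull 1 r x = - outer_kernel r (cos x).
Proof.
  unfold radial_pull, pair_dist, outer_kernel.
  replace (1 ^ 2 + r ^ 2 - 2 * 1 * r * cos x) with (1 + r ^ 2 - 2 * r * cos x) by ring.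
  unfold Rdiv. ring.
Qed.

Lemma radial_pull_from_center q x : radial_pull 0 q x = q / sqrt (q ^ 2) ^ 3 * cos x.
Proof.
  unfold radial_pull, pair_dist.
  replace (0 ^ 2 + q ^ 2 - 2 * 0 * q * cos x) with (q ^ 2) by ring. unfold Rdiv. ring.
Qed.

Lemma tangential_pull_from_center q x : tangential_pull 0 q x = q / sqrt (q ^ 2) ^ 3 * sin x.
Proof.
  unfold tangential_pull, pair_dist.
  replace (0 ^ 2 + q ^ 2 - 2 * 0 * q * cos x) with (q ^ 2) by ring. unfold Rdiv. ring.
Qed.

Lemma radial_pull_to_center p x : 0 < p -> radial_pull p 0 x = - / p ^ 2.
Proof.
  intros Hp. unfold radial_pull, pair_dist.
  replace (p ^ 2 + 0 ^ 2 - 2 * p * 0 * cos x) with (p ^ 2) by ring.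
  rewrite sqrt_pow2 by lra. field. lra.
Qed.

Lemma tangential_pull_to_center p x : tangential_pull p 0 x = 0.
Proof. unfold tangential_pull, Rdiv. ring. Qed.

Lemma polygon_sum_tangential_pull n p q c k : (0 < n)%nat -> c = 0 \/ c = PI / INR n ->
  polygon_sum n (tangential_pull p q) (c - 2 * PI * INR k / INR n) = 0.
Proof.
  intros Hn Hc. apply polygon_sum_odd_rotate; auto.
  - apply tangential_pull_periodic.
  - apply tangential_pull_odd.
Qed.

Lemma center_balance n r m0 m1 m2 : (2 <= n)%nat ->
  rsum (interaction radial_pull n r (mass_of_system n (m0, m1, m2)) 0) (S (2 * n)) = 0 /\
  rsum (interaction tangential_pull n r (mass_of_system n (m0, m1, m2)) 0) (S (2 * n)) = 0.
Proof.
  intros Hn. destruct (polygon_sum_cos_sin n (PI / INR n) Hn) as [C1 S1].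
  destruct (polygon_sum_cos_sin n 0 Hn) as [C2 S2].
  rewrite !interaction_sum. change (body_radius n r 0) with 0. change (body_angle n 0) with 0.
  rewrite !Rminus_0_r.
  rewrite !(polygon_sum_ext n (radial_pull 0 _) _ _ (radial_pull_from_center _)).
  rewrite !(polygon_sum_ext n (tangential_pull 0 _) _ _ (tangential_pull_from_center _)).
  rewrite !polygon_sum_scal_l, C1, S1, C2, S2.
  unfold radial_pull, tangential_pull, Rdiv. split; ring.
Qed.

Lemma inner_balance n r m0 m1 m2 k : (2 <= n)%nat -> (k < n)%nat -> 0 < r ->
  rsum (interaction radial_pull n r (mass_of_system n (m0, m1, m2)) (1 + k)) (S (2 * n))
    = - m1 * (m0 / r ^ 2 + m1 * self_sum n / r ^ 2 + m2 * inner_sum n r) /\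
  rsum (interaction tangential_pull n r (mass_of_system n (m0, m1, m2)) (1 + k)) (S (2 * n)) = 0.
Proof.
  intros Hn Hk Hr. assert (Hn0 : (0 < n)%nat) by lia.
  assert (HnR : INR n <> 0) by (apply not_0_INR; lia).
  rewrite !interaction_sum, radius_inner, angle_inner, mass_inner by auto.
  replace (PI / INR n - (2 * PI * INR k / INR n + PI / INR n)) with (0 - 2 * PI * INR k / INR n)
    by (field; auto).
  replace (0 - (2 * PI * INR k / INR n + PI / INR n)) with (PI / INR n - 2 * PI * INR (S k) / INR n)
    by (rewrite S_INR; field; auto).
  rewrite !polygon_sum_tangential_pull by auto.
  rewrite !polygon_sum_rotate_by by (auto; apply radial_pull_periodic).
  rewrite radial_pull_to_center, tangential_pull_to_center by auto.
  rewrite (polygon_sum_ext n (radial_pull r r) _ _ (radial_pull_self r Hr)).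
  rewrite (polygon_sum_ext n (radial_pull r 1) _ _ (radial_pull_inner r)).
  rewrite polygon_sum_scal_l, polygon_sum_opp.
  fold (self_sum n) (inner_sum n r). split; [field; lra | ring].
Qed.

Lemma outer_balance n r m0 m1 m2 k : (2 <= n)%nat -> (k < n)%nat ->
  rsum (interaction radial_pull n r (mass_of_system n (m0, m1, m2)) (1 + n + k)) (S (2 * n))
    = - m2 * (m0 + m1 * outer_sum n r + m2 * self_sum n) /\
  rsum (interaction tangential_pull n r (mass_of_system n (m0, m1, m2)) (1 + n + k)) (S (2 * n)) = 0.
Proof.
  intros Hn Hk. assert (Hn0 : (0 < n)%nat) by lia.
  rewrite !interaction_sum, radius_outer, angle_outer, mass_outer.
  rewrite !polygon_sum_tangential_pull by auto.
  rewrite !polygon_sum_rotate_by by (auto; apply radial_pull_periodic).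
  rewrite radial_pull_to_center, tangential_pull_to_center by lra.
  rewrite (polygon_sum_ext n (radial_pull 1 1) _ _ (radial_pull_self 1 Rlt_0_1)).
  rewrite (polygon_sum_ext n (radial_pull 1 r) _ _ (radial_pull_outer r)).
  rewrite polygon_sum_scal_l, polygon_sum_opp.
  fold (self_sum n) (outer_sum n r). split; [field | ring].
Qed.

Lemma is_derive_rotation (X : C) (t : R) :
  is_derive (fun s : R => Cmult X (cos s, sin s)) t (Cmult X (- sin t, cos t)).
Proof.
  destruct X as [x1 x2].
  apply is_derive_ext with
    (f := fun s : R => plus (scal (cos s) ((x1, x2) : C)) (scal (sin s) ((- x2, x1) : C))).
  { intros s. unfold Cmult; simpl. unfold plus, scal; simpl.
    unfold prod_plus, prod_scal; simpl. unfold plus, scal; simpl. unfold mult; simpl. f_equal; ring. }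
  replace (Cmult (x1, x2) (- sin t, cos t)) with
    (plus (scal (- sin t) ((x1, x2) : C)) (scal (cos t) ((- x2, x1) : C))).
  2: { unfold Cmult; simpl. unfold plus, scal; simpl.
       unfold prod_plus, prod_scal; simpl. unfold plus, scal; simpl. unfold mult; simpl. f_equal; ring. }
  apply (is_derive_plus (V := C_R_NormedModule));
    apply (@is_derive_scal_l R_AbsRing C_R_NormedModule); auto_derive; auto; ring.
Qed.

(* The radial balance of an inner body (multiplied by [r^2], with [u = r^2 U] and [c = r^3])
   and of an outer body, see [two_ngon_relative_equilibrium]. *)
Definition linear_balance (s u w c : R) (m : R * R * R) : Prop :=
  let '(m0, m1, m2) := m in m0 + m1 * s + m2 * u = c /\ m0 + m1 * w + m2 * s = 1.

Lemma two_ngon_relative_equilibrium n r m : (2 <= n)%nat -> 0 < r ->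
  linear_balance (self_sum n) (r ^ 2 * inner_sum n r) (outer_sum n r) (r ^ 3) m ->
  is_nbody_solution (1 + 2 * n) (mass_of_system n m) (rel_eq_motion (two_ngon_config n r 1)).
Proof.
  destruct m as [[m0 m1] m2]. intros Hn Hr [Einner Eouter].
  set (x := two_ngon_config n r 1).
  exists (fun k t => Cmult (x k) (- sin t, cos t)), (fun k t => Cmult (x k) (- cos t, - sin t)).
  intros i Hi t. split; [| split].
  - apply is_derive_rotation.
  - apply is_derive_ext with (f := fun s => Cmult (Cmult (x i) (0, 1)) (cos s, sin s)).
    { intros s. unfold Cmult; simpl. f_equal; ring. }
    replace (Cmult (x i) (- cos t, - sin t)) with (Cmult (Cmult (x i) (0, 1)) (- sin t, cos t))
      by (unfold Cmult; simpl; f_equal; ring).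
    apply is_derive_rotation.
  - unfold x. rewrite newton_rhs_polar, two_ngon_config_polar.
    replace (Cmult (RtoC (mass_of_system n (m0, m1, m2) i)) _) with
      (Cmult (cos (body_angle n i + t), sin (body_angle n i + t))
             (- mass_of_system n (m0, m1, m2) i * body_radius n r i, 0))
      by (unfold Cmult, RtoC; simpl; rewrite cos_plus, sin_plus; f_equal; ring).
    f_equal.
    destruct (Nat.eq_dec i 0) as [-> | Hi0].
    { destruct (center_balance n r m0 m1 m2 Hn) as [-> ->]. change (body_radius n r 0) with 0. f_equal; ring. }
    destruct (Nat.le_gt_cases i n) as [Hin | Hin].
    + replace i with (1 + (i - 1))%nat by lia.
      destruct (inner_balance n r m0 m1 m2 (i - 1) Hn ltac:(lia) Hr) as [-> ->].
      rewrite radius_inner, mass_inner by lia. f_equal.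
      apply (Rmult_eq_reg_r (r ^ 2)); [| nra]. field_simplify; [nra | lra].
    + replace i with (1 + n + (i - 1 - n))%nat by lia.
      destruct (outer_balance n r m0 m1 m2 (i - 1 - n) Hn ltac:(lia)) as [-> ->].
      rewrite radius_outer, mass_outer. f_equal. nra.
Qed.

Lemma rsum_over_bodies (F : R -> R -> R -> R) n r m0 m1 m2 :
  rsum (fun j => F (mass_of_system n (m0, m1, m2) j) (body_radius n r j) (body_angle n j)) (S (2 * n))
  = F m0 0 0 + polygon_sum n (F m1 r) (PI / INR n) + polygon_sum n (F m2 1) 0.
Proof.
  rewrite rsum_bodies. unfold polygon_sum. f_equal; [f_equal |]; apply rsum_ext; intros l Hl.
  - now rewrite mass_inner, radius_inner, angle_inner.
  - now rewrite mass_outer, radius_outer, angle_outer, Rplus_0_r.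
Qed.

Lemma two_ngon_mass_moment n r m : (2 <= n)%nat ->
  mass_moment (1 + 2 * n) (mass_of_system n m) (two_ngon_config n r 1) = RtoC 0.
Proof.
  intros Hn. destruct m as [[m0 m1] m2].
  destruct (polygon_sum_cos_sin n (PI / INR n) Hn) as [C1 S1].
  destruct (polygon_sum_cos_sin n 0 Hn) as [C2 S2].
  unfold mass_moment. replace (1 + 2 * n - 1)%nat with (2 * n)%nat by lia.
  rewrite sum_n_complex. unfold RtoC. f_equal.
  - transitivity (rsum (fun j => (fun m p a => m * p * cos a)
      (mass_of_system n (m0, m1, m2) j) (body_radius n r j) (body_angle n j)) (S (2 * n))).
    { apply rsum_ext. intros j _. rewrite two_ngon_config_polar. simpl. ring. }
    rewrite (rsum_over_bodies (fun m p a => m * p * cos a)). rewrite !polygon_sum_scal_l, C1, C2. ring.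
  - transitivity (rsum (fun j => (fun m p a => m * p * sin a)
      (mass_of_system n (m0, m1, m2) j) (body_radius n r j) (body_angle n j)) (S (2 * n))).
    { apply rsum_ext. intros j _. rewrite two_ngon_config_polar. simpl. ring. }
    rewrite (rsum_over_bodies (fun m p a => m * p * sin a)). rewrite !polygon_sum_scal_l, S1, S2. ring.
Qed.

(** * Lines of mass systems *)

Lemma add_small_pos p k tau : 0 < p -> 0 <= tau <= p / (Rabs k + 1) -> 0 < p + tau * k.
Proof.
  intros Hp [H0 H1]. pose proof (Rabs_pos k). pose proof (Rle_abs (- k)) as Hk.
  rewrite Rabs_Ropp in Hk.
  assert (tau * Rabs k < p).
  { apply Rle_lt_trans with (p / (Rabs k + 1) * Rabs k); [apply Rmult_le_compat_r; lra |].
    replace (p / (Rabs k + 1) * Rabs k) with (p - p / (Rabs k + 1)) by (field; lra).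
    assert (0 < p / (Rabs k + 1)) by (apply Rdiv_lt_0_compat; lra). lra. }
  nra.
Qed.

Lemma perverse_mass_pair n s u w c :
  s < w -> s < c * w -> c < 1 -> (INR n - s) ^ 2 = (u - INR n) * (w - INR n) ->
  exists m m' : R * R * R, m <> m' /\ positive_system m /\ positive_system m' /\
    total_mass n m = total_mass n m' /\ linear_balance s u w c m /\ linear_balance s u w c m'.
Proof.
  intros Hsw Hsc Hc Hdrift. set (N := INR n) in *. set (D := w - s).
  (* the solution with [m2 = 0], and the kernel direction [(k0, k1, 1)] *)
  set (p0 := (w * c - s) / D). set (p1 := (1 - c) / D).
  set (k1 := (u - s) / D). set (k0 := - (s + w * k1)).
  assert (Hp0 : 0 < p0) by (apply Rdiv_lt_0_compat; unfold D; lra).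
  assert (Hp1 : 0 < p1) by (apply Rdiv_lt_0_compat; unfold D; lra).
  set (h := Rmin (p0 / (Rabs k0 + 1)) (p1 / (Rabs k1 + 1))).
  assert (Hh0 : h <= p0 / (Rabs k0 + 1)) by apply Rmin_l.
  assert (Hh1 : h <= p1 / (Rabs k1 + 1)) by apply Rmin_r.
  assert (Hh : 0 < h).
  { pose proof (Rabs_pos k0). pose proof (Rabs_pos k1). apply Rmin_pos; apply Rdiv_lt_0_compat; lra. }
  set (mk := fun tau => (p0 + tau * k0, p1 + tau * k1, tau)).
  assert (Hpos : forall tau, 0 < tau <= h -> positive_system (mk tau)).
  { intros tau Htau. unfold positive_system, mk.
    split; [| split]; [apply add_small_pos | apply add_small_pos | ]; lra. }
  assert (Hbal : forall tau, linear_balance s u w c (mk tau)).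
  { intros tau. unfold linear_balance, mk, p0, p1, k0, k1, D. split; field; lra. }
  assert (Htotal : forall tau, total_mass n (mk tau) = p0 + N * p1).
  { intros tau. unfold total_mass, mk. fold N.
    transitivity (p0 + N * p1 + tau * (((N - s) ^ 2 - (u - N) * (w - N)) / D)).
    - unfold p0, p1, k0, k1, D. field. lra.
    - rewrite Hdrift. unfold Rdiv. ring. }
  exists (mk (h / 2)), (mk h).
  split; [unfold mk; intros E; injection E; lra |].
  split; [apply Hpos; lra |]. split; [apply Hpos; lra |].
  split; [now rewrite !Htotal |]. split; apply Hbal.
Qed.

(** * Numerical estimates *)

Lemma PI_bounds : 3.14159 <= PI <= 3.14160.
Proof.
  destruct (PI_2_3_7_ineq 2) as [H1 H2].
  unfold tg_alt, PI_2_3_7_tg, Ratan_seq in H1, H2. simpl in H1, H2. lra.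
Qed.

Lemma sin_taylor_ub x : 0 <= x <= PI -> sin x <= x - x ^ 3 / 6 + x ^ 5 / 120 - x ^ 7 / 5040 + x ^ 9 / 362880.
Proof.
  intros Hx. destruct (SIN x) as [_ H]; try lra.
  unfold sin_ub, sin_approx, sin_term in H. cbn [sum_f_R0 Nat.mul Nat.add] in H.
  replace (INR (fact 1)) with 1 in H by reflexivity.
  replace (INR (fact 3)) with 6 in H by (rewrite INR_IZR_INZ; reflexivity).
  replace (INR (fact 5)) with 120 in H by (rewrite INR_IZR_INZ; reflexivity).
  replace (INR (fact 7)) with 5040 in H by (rewrite INR_IZR_INZ; reflexivity).
  replace (INR (fact 9)) with 362880 in H by (rewrite INR_IZR_INZ; vm_compute; reflexivity).
  simpl pow in H |- *. lra.
Qed.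

Lemma sin_taylor_lb x : 0 <= x <= 4 -> x - x ^ 3 / 6 <= sin x.
Proof.
  intros Hx. destruct (pre_sin_bound x 0) as [H _]; try lra.
  unfold sin_approx, sin_term in H. cbn [sum_f_R0 Nat.mul Nat.add] in H.
  replace (INR (fact 1)) with 1 in H by reflexivity.
  replace (INR (fact 3)) with 6 in H by (rewrite INR_IZR_INZ; reflexivity).
  simpl pow in H |- *. lra.
Qed.

Lemma cos_taylor_bounds x : -2 <= x <= 2 -> 1 - x ^ 2 / 2 <= cos x <= 1 - x ^ 2 / 2 + x ^ 4 / 24.
Proof.
  intros Hx. destruct (pre_cos_bound x 0) as [H1 H2]; try lra.
  unfold cos_approx, cos_term in H1, H2. cbn [sum_f_R0 Nat.mul Nat.add] in H1, H2.
  replace (INR (fact 0)) with 1 in H1, H2 by reflexivity.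
  replace (INR (fact 2)) with 2 in H1, H2 by (rewrite INR_IZR_INZ; reflexivity).
  replace (INR (fact 4)) with 24 in H2 by (rewrite INR_IZR_INZ; reflexivity).
  simpl pow in H1, H2 |- *. lra.
Qed.

Definition csc_laurent (x : R) : R :=
  / x + x / 6 + 7 * x ^ 3 / 360 + 31 * x ^ 5 / 15120 + 127 * x ^ 7 / 604800.

Lemma csc_laurent_le x : 0 < x <= 1.6 -> csc_laurent x <= / sin x.
Proof.
  intros Hx. pose proof PI_bounds.
  assert (Hs : 0 < sin x) by (apply sin_gt_0; lra).
  pose proof (sin_taylor_ub x ltac:(lra)) as Hu.
  set (S9 := x - x ^ 3 / 6 + x ^ 5 / 120 - x ^ 7 / 5040 + x ^ 9 / 362880) in Hu.
  (* all terms of [csc_laurent x * S9 - 1] have degree at least 10 *)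
  assert (Hprod : csc_laurent x * S9 <= 1).
  { set (y := x ^ 2).
    assert (E : csc_laurent x * S9 - 1 =
      y ^ 5 * (-29/1360800 + 3193/2286144000 * y - 247/6858432000 * y ^ 2 + 127/219469824000 * y ^ 3))
      by (unfold csc_laurent, S9, y; field; lra).
    assert (Hy : 0 <= y <= 2.56) by (unfold y; split; nra).
    assert (0 <= y ^ 5) by (apply pow_le; lra).
    assert (-29/1360800 + 3193/2286144000 * y - 247/6858432000 * y ^ 2 + 127/219469824000 * y ^ 3 <= 0).
    { assert (y ^ 3 <= 2.56 * y ^ 2) by (simpl; nra). nra. }
    nra. }
  assert (0 < csc_laurent x).
  { unfold csc_laurent. assert (0 < / x) by (apply Rinv_0_lt_compat; lra).
    assert (0 < x ^ 3) by (apply pow_lt; lra). assert (0 < x ^ 5) by (apply pow_lt; lra).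
    assert (0 < x ^ 7) by (apply pow_lt; lra). lra. }
  apply (Rmult_le_reg_r (sin x)); auto. rewrite Rinv_l by lra. nra.
Qed.

Lemma inv_sin_le x : 0 < x <= 1.6 -> / sin x <= / x + 1 / 2.
Proof.
  intros Hx. pose proof PI_bounds.
  assert (Hs : 0 < sin x) by (apply sin_gt_0; lra).
  pose proof (sin_taylor_lb x ltac:(lra)) as Hl.
  assert (0 < / x) by (apply Rinv_0_lt_compat; lra).
  assert (1 <= (/ x + 1 / 2) * (x - x ^ 3 / 6)).
  { replace ((/ x + 1 / 2) * (x - x ^ 3 / 6)) with (1 + x * (6 - 2 * x - x ^ 2) / 12) by (field; lra).
    assert (0 <= x * (6 - 2 * x - x ^ 2)) by (apply Rmult_le_pos; nra). lra. }
  apply (Rmult_le_reg_r (sin x)); auto. rewrite Rinv_l by lra. nra.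
Qed.

(** * The self-interaction sums *)

Lemma self_kernel_eq c : c < 1 -> self_kernel c = / (2 * sqrt (2 - 2 * c)).
Proof.
  intros H. unfold self_kernel.
  assert (Hq : 0 < sqrt (2 - 2 * c)) by (apply sqrt_lt_R0; lra).
  replace (1 - c) with (sqrt (2 - 2 * c) ^ 2 / 2) by (rewrite pow2_sqrt by lra; field).
  field. lra.
Qed.

Lemma self_kernel_1 : self_kernel 1 = 0.
Proof. unfold self_kernel, Rdiv. ring. Qed.

Lemma self_kernel_m1 : self_kernel (-1) = 1 / 4.
Proof.
  rewrite self_kernel_eq by lra. replace (2 - 2 * -1) with (2 ^ 2) by ring.
  rewrite sqrt_pow2 by lra. field.
Qed.

Lemma self_kernel_nonneg c : c <= 1 -> 0 <= self_kernel c.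
Proof.
  intros H. destruct (Req_dec c 1) as [-> | Hne]; [rewrite self_kernel_1; lra |].
  rewrite self_kernel_eq by lra. apply Rlt_le, Rinv_0_lt_compat.
  assert (0 < sqrt (2 - 2 * c)) by (apply sqrt_lt_R0; lra). lra.
Qed.

Lemma self_kernel_le c1 c2 : c1 <= c2 -> c2 < 1 -> self_kernel c1 <= self_kernel c2.
Proof.
  intros H1 H2. rewrite !self_kernel_eq by lra.
  assert (0 < sqrt (2 - 2 * c2)) by (apply sqrt_lt_R0; lra).
  assert (sqrt (2 - 2 * c2) <= sqrt (2 - 2 * c1)) by (apply sqrt_le_1_alt; lra).
  apply Rinv_le_contravar; lra.
Qed.

Lemma self_kernel_cos b : 0 < b < 2 * PI -> self_kernel (cos b) = / (4 * sin (b / 2)).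
Proof.
  intros Hb. assert (Hs : 0 < sin (b / 2)) by (apply sin_gt_0; lra).
  assert (Hcos : cos b = 1 - 2 * sin (b / 2) ^ 2).
  { replace b with (2 * (b / 2)) at 1 by field. rewrite cos_2a_sin. ring. }
  rewrite self_kernel_eq by nra. rewrite Hcos.
  replace (2 - 2 * (1 - 2 * sin (b / 2) ^ 2)) with ((2 * sin (b / 2)) ^ 2) by ring.
  rewrite sqrt_pow2 by lra. field. lra.
Qed.

Definition csc_sum (n : nat) : R := rsum (fun k => / (4 * sin (INR (S k) * (PI / (2 * INR n))))) (n - 1).

(* [S + T] sums [self_kernel (cos (k pi / n))] over [k < 2n]; the terms [k] and [2n - k]
   coincide, [k = 0] contributes [0] and [k = n] contributes [1/4]. *)
Lemma self_sums_csc n : (2 <= n)%nat -> self_sum n + shifted_self_sum n = 1 / 4 + 2 * csc_sum n.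
Proof.
  intros Hn. assert (HnR : 0 < INR n) by (apply lt_0_INR; lia).
  set (g := fun k => self_kernel (cos (INR k * PI / INR n))).
  assert (Eeo : self_sum n + shifted_self_sum n = rsum g (2 * n)).
  { rewrite rsum_even_odd. unfold self_sum, shifted_self_sum, polygon_sum.
    f_equal; apply rsum_ext; intros l _; unfold g; rewrite ?plus_INR, mult_INR; simpl INR;
      do 2 f_equal; field; lra. }
  rewrite Eeo. replace (2 * n)%nat with (S n + (n - 1))%nat by lia.
  rewrite rsum_split. simpl rsum at 1.
  replace n with (S (n - 1)) at 1 by lia. rewrite rsum_succ_l.
  replace (S (n - 1)) with n by lia.
  assert (Erev : rsum (fun l => g (S n + l)%nat) (n - 1) = rsum (fun k => g (S k)) (n - 1)).
  { rewrite <- rsum_rev. apply rsum_ext. intros j Hj. unfold g.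
    replace (S n + (n - 1 - 1 - j))%nat with (2 * n - S j)%nat by lia.
    rewrite minus_INR, mult_INR by lia. change (INR 2) with 2.
    replace ((2 * INR n - INR (S j)) * PI / INR n) with (- (INR (S j) * PI / INR n) + 2 * PI) by (field; lra).
    now rewrite cos_plus_2PI, cos_neg. }
  assert (E0 : g 0%nat = 0) by (unfold g; simpl INR; rewrite Rmult_0_l, Rdiv_0_l, cos_0; apply self_kernel_1).
  assert (En : g n = 1 / 4).
  { unfold g. replace (INR n * PI / INR n) with PI by (field; lra). rewrite cos_PI. apply self_kernel_m1. }
  rewrite Erev, E0, En. unfold csc_sum.
  rewrite (rsum_ext (fun k => g (S k)) (fun k => / (4 * sin (INR (S k) * (PI / (2 * INR n)))))); [ring |].
  intros k Hk. unfold g. pose proof PI_RGT_0.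
  assert (INR (S k) < INR n) by (apply lt_INR; lia). assert (0 < INR (S k)) by (apply lt_0_INR; lia).
  rewrite self_kernel_cos.
  - do 3 f_equal. field. lra.
  - split; [apply Rdiv_lt_0_compat; nra |].
    apply (Rmult_lt_reg_r (INR n)); auto. unfold Rdiv. rewrite Rmult_assoc, Rinv_l by lra. nra.
Qed.

Definition harmonic (N : nat) : R := rsum (fun k => / INR (S k)) N.

Fixpoint harmonic_Q (k : nat) : Q :=
  match k with
  | O => 0%Q
  | S k' => Qred (harmonic_Q k' + (1 # Pos.of_succ_nat k'))%Q
  end.

Lemma harmonic_Q_correct k : Q2R (harmonic_Q k) = harmonic k.
Proof.
  induction k as [|k IH]; [unfold Q2R, harmonic; simpl; lra |].
  cbn [harmonic_Q]. unfold harmonic. cbn [rsum]. fold (harmonic k).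
  rewrite (Qeq_eqR _ _ (Qred_correct _)), Q2R_plus, IH. f_equal.
  unfold Q2R. rewrite INR_IZR_INZ, Nat2Z.inj_succ, <- Zpos_P_of_succ_nat. cbn [Qnum Qden]. field.
  apply not_0_IZR. discriminate.
Qed.

Lemma harmonic_236_bounds : 6.0431 <= harmonic 236 <= 6.0432.
Proof.
  rewrite <- harmonic_Q_correct.
  assert (H1 : (60431 # 10000 <= harmonic_Q 236)%Q) by (apply Qle_bool_iff; vm_compute; reflexivity).
  assert (H2 : (harmonic_Q 236 <= 60432 # 10000)%Q) by (apply Qle_bool_iff; vm_compute; reflexivity).
  apply Qle_Rle in H1, H2.
  replace (Q2R (60431 # 10000)) with 6.0431 in H1 by (unfold Q2R; cbn [Qnum Qden]; lra).
  replace (Q2R (60432 # 10000)) with 6.0432 in H2 by (unfold Q2R; cbn [Qnum Qden]; lra).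
  lra.
Qed.

Lemma harmonic_le a b : (a <= b)%nat -> harmonic a <= harmonic b.
Proof.
  induction 1 as [|m _ IH]; [lra |]. change (harmonic (S m)) with (harmonic m + / INR (S m)).
  assert (0 < / INR (S m)) by (apply Rinv_0_lt_compat, lt_0_INR; lia). lra.
Qed.

Lemma harmonic_tail_le n : (237 <= n)%nat -> harmonic (n - 1) <= harmonic 236 + (INR n - 237) / 237.
Proof.
  induction 1 as [|m Hm IH].
  - replace (INR 237) with 237 by (rewrite INR_IZR_INZ; reflexivity). simpl (237 - 1)%nat. lra.
  - replace (S m - 1)%nat with (S (m - 1)) by lia.
    change (harmonic (S (m - 1))) with (harmonic (m - 1) + / INR (S (m - 1))).
    replace (S (m - 1)) with m by lia. rewrite S_INR.
    assert (237 <= INR m) by (apply (le_INR 237) in Hm; now rewrite INR_IZR_INZ in Hm).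
    assert (/ INR m <= / 237) by (apply Rinv_le_contravar; lra). lra.
Qed.

Definition power_sum (m N : nat) : R := rsum (fun k => INR (S k) ^ m) N.

Lemma power_sum_trapezoid m N : (1 <= m)%nat ->
  (forall y, 0 <= y -> (y + 1) ^ S m / INR (S m) - y ^ S m / INR (S m) <= (y ^ m + (y + 1) ^ m) / 2) ->
  INR (S N) ^ S m / INR (S m) - INR (S N) ^ m / 2 <= power_sum m N.
Proof.
  intros Hm Hstep. induction N as [|N IH].
  - specialize (Hstep 0 (Rle_refl 0)).
    rewrite !pow_i in Hstep by lia. simpl INR at 1 3. rewrite !Rplus_0_l, !pow1 in *.
    unfold power_sum; simpl rsum. lra.
  - change (power_sum m (S N)) with (power_sum m N + INR (S N) ^ m).
    specialize (Hstep (INR (S N)) (pos_INR _)). rewrite <- S_INR in Hstep. lra.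
Qed.

Lemma trapezoid_step_odd m y : (m = 1 \/ m = 3 \/ m = 5 \/ m = 7)%nat -> 0 <= y ->
  (y + 1) ^ S m / INR (S m) - y ^ S m / INR (S m) <= (y ^ m + (y + 1) ^ m) / 2.
Proof.
  intros Hm Hy.
  assert (0 <= y ^ 2) by (apply pow_le; lra). assert (0 <= y ^ 3) by (apply pow_le; lra).
  assert (0 <= y ^ 4) by (apply pow_le; lra). assert (0 <= y ^ 5) by (apply pow_le; lra).
  apply Rminus_le. destruct Hm as [-> | [-> | [-> | ->]]]; simpl INR.
  - replace (_ - _) with 0 by field. lra.
  - replace (_ - _) with (- (1/4 + y/2)) by field. lra.
  - replace (_ - _) with (- (1/3 + 3/2*y + 5/2*y^2 + 5/3*y^3)) by field. lra.
  - replace (_ - _) with (- (3/8 + 5/2*y + 7*y^2 + 21/2*y^3 + 35/4*y^4 + 7/2*y^5)) by field. lra.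
Qed.

Lemma scaled_power_sum_lb m h n : (m = 1 \/ m = 3 \/ m = 5 \/ m = 7)%nat -> 0 <= h -> (1 <= n)%nat ->
  (h * INR n) ^ m * (INR n / INR (S m) - 1 / 2) <= h ^ m * power_sum m (n - 1).
Proof.
  intros Hm Hh Hn.
  pose proof (power_sum_trapezoid m (n - 1) ltac:(lia) (fun y Hy => trapezoid_step_odd m y Hm Hy)) as P.
  replace (S (n - 1)) with n in P by lia.
  assert (INR (S m) <> 0) by (apply not_0_INR; lia).
  replace ((h * INR n) ^ m * (INR n / INR (S m) - 1 / 2))
    with (h ^ m * (INR n ^ S m / INR (S m) - INR n ^ m / 2)) by (rewrite Rpow_mult_distr; simpl pow; field; auto).
  apply Rmult_le_compat_l; [apply pow_le |]; assumption.
Qed.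

Lemma csc_laurent_sum N h : h <> 0 ->
  rsum (fun k => csc_laurent (INR (S k) * h)) N =
    / h * harmonic N + h / 6 * power_sum 1 N + 7 * h ^ 3 / 360 * power_sum 3 N
    + 31 * h ^ 5 / 15120 * power_sum 5 N + 127 * h ^ 7 / 604800 * power_sum 7 N.
Proof.
  intros Hh. unfold harmonic, power_sum. rewrite <- !rsum_scal_l, <- !rsum_plus. apply rsum_ext.
  intros k _. unfold csc_laurent. assert (INR (S k) <> 0) by (apply not_0_INR; lia). field. auto.
Qed.

Lemma csc_sum_angle n k : (2 <= n)%nat -> (k < n - 1)%nat ->
  0 < INR (S k) * (PI / (2 * INR n)) <= PI / 2.
Proof.
  intros Hn Hk. assert (HnR : 0 < INR n) by (apply lt_0_INR; lia). pose proof PI_RGT_0.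
  assert (0 < INR (S k)) by (apply lt_0_INR; lia).
  assert (INR (S k) < INR n) by (apply lt_INR; lia).
  split; [apply Rmult_lt_0_compat; [| apply Rdiv_lt_0_compat]; lra |].
  apply (Rmult_le_reg_r (2 * INR n)); [lra |]. field_simplify; nra.
Qed.

Lemma csc_sum_ge n : (2 <= n)%nat ->
  1 / 4 * rsum (fun k => csc_laurent (INR (S k) * (PI / (2 * INR n)))) (n - 1) <= csc_sum n.
Proof.
  intros Hn. unfold csc_sum. rewrite <- rsum_scal_l. apply rsum_le. intros k Hk.
  pose proof (csc_sum_angle n k Hn Hk) as Hx. pose proof PI_bounds.
  set (x := INR (S k) * (PI / (2 * INR n))) in *.
  pose proof (csc_laurent_le x ltac:(lra)).
  assert (0 < sin x) by (apply sin_gt_0; lra).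
  rewrite Rinv_mult. lra.
Qed.

Definition laurent_correction (q N : R) : R :=
  1 / 6 * q * (N / 2 - 1 / 2) + 7 / 360 * q ^ 3 * (N / 4 - 1 / 2)
  + 31 / 15120 * q ^ 5 * (N / 6 - 1 / 2) + 127 / 604800 * q ^ 7 * (N / 8 - 1 / 2).

Lemma self_sums_lb n : (2 <= n)%nat ->
  1 / 4 + INR n / PI * harmonic (n - 1) + 1 / 2 * laurent_correction (PI / 2) (INR n)
    <= self_sum n + shifted_self_sum n.
Proof.
  intros Hn. rewrite self_sums_csc by auto.
  assert (HnR : 0 < INR n) by (apply lt_0_INR; lia). pose proof PI_bounds.
  set (h := PI / (2 * INR n)).
  assert (Hh : 0 < h) by (apply Rdiv_lt_0_compat; lra).
  assert (Ehn : h * INR n = PI / 2) by (unfold h; field; lra).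
  pose proof (csc_sum_ge n Hn) as L. fold h in L.
  rewrite csc_laurent_sum in L by lra.
  pose proof (scaled_power_sum_lb 1 h n ltac:(lia) ltac:(lra) ltac:(lia)) as P1.
  pose proof (scaled_power_sum_lb 3 h n ltac:(lia) ltac:(lra) ltac:(lia)) as P3.
  pose proof (scaled_power_sum_lb 5 h n ltac:(lia) ltac:(lra) ltac:(lia)) as P5.
  pose proof (scaled_power_sum_lb 7 h n ltac:(lia) ltac:(lra) ltac:(lia)) as P7.
  rewrite Ehn in P1, P3, P5, P7. simpl INR in P1, P3, P5, P7. rewrite pow_1 in P1.
  assert (Eharm : / h * harmonic (n - 1) = 2 * (INR n / PI * harmonic (n - 1))) by (unfold h; field; lra).
  unfold laurent_correction. lra.
Qed.

Lemma self_sums_ub n : (2 <= n)%nat ->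
  self_sum n + shifted_self_sum n <= 1 / 4 + INR n / PI * harmonic (n - 1) + (INR n - 1) / 4.
Proof.
  intros Hn. rewrite self_sums_csc by auto.
  assert (HnR : 0 < INR n) by (apply lt_0_INR; lia). pose proof PI_bounds.
  assert (L : csc_sum n <= rsum (fun k => 1 / 4 * / (INR (S k) * (PI / (2 * INR n))) + 1 / 8) (n - 1)).
  { unfold csc_sum. apply rsum_le. intros k Hk.
    pose proof (csc_sum_angle n k Hn Hk) as Hx.
    set (x := INR (S k) * (PI / (2 * INR n))) in *.
    pose proof (inv_sin_le x ltac:(lra)). rewrite Rinv_mult. lra. }
  rewrite rsum_plus, rsum_scal_l, rsum_const, minus_INR in L by lia.
  replace (rsum (fun k => / (INR (S k) * (PI / (2 * INR n)))) (n - 1)) with (2 * INR n / PI * harmonic (n - 1)) in L.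
  - simpl INR in L. lra.
  - unfold harmonic. rewrite <- rsum_scal_l. apply rsum_ext. intros k _.
    assert (INR (S k) <> 0) by (apply not_0_INR; lia). field. split; lra.
Qed.

Lemma INR_ge_237 n : (237 <= n)%nat -> 237 <= INR n.
Proof. intros H. apply (le_INR 237) in H. now rewrite INR_IZR_INZ in H. Qed.

Lemma INR_div_4PI_ge_18 n : (237 <= n)%nat -> 18 <= INR n / (4 * PI).
Proof.
  intros Hn. pose proof (INR_ge_237 n Hn). pose proof PI_bounds.
  apply (Rmult_le_reg_r (4 * PI)); [lra |]. unfold Rdiv. rewrite Rmult_assoc, Rinv_l by lra. lra.
Qed.

Lemma laurent_correction_le q1 q2 N : 0 <= q1 <= q2 -> 4 <= N ->
  laurent_correction q1 N <= laurent_correction q2 N.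
Proof.
  intros Hq HN. unfold laurent_correction.
  assert (q1 ^ 3 <= q2 ^ 3) by (apply pow_incr; lra).
  assert (q1 ^ 5 <= q2 ^ 5) by (apply pow_incr; lra).
  assert (q1 ^ 7 <= q2 ^ 7) by (apply pow_incr; lra).
  repeat apply Rplus_le_compat; apply Rmult_le_compat_r; try lra;
    apply Rmult_le_compat_l; lra.
Qed.

Lemma self_sums_gt n : (237 <= n)%nat -> 2 * INR n < self_sum n + shifted_self_sum n.
Proof.
  intros Hn. pose proof (self_sums_lb n ltac:(lia)) as L.
  pose proof PI_bounds. pose proof harmonic_236_bounds.
  pose proof (harmonic_le 236 (n - 1) ltac:(lia)). pose proof (INR_ge_237 n Hn).
  assert (INR n * (6.0431 / 3.1416) <= INR n / PI * harmonic (n - 1)).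
  { unfold Rdiv. rewrite Rmult_assoc. apply Rmult_le_compat_l; [lra |].
    apply Rle_trans with (6.0431 * / PI).
    - apply Rmult_le_compat_l; [lra |]. apply Rinv_le_contravar; lra.
    - rewrite Rmult_comm. apply Rmult_le_compat_l; [apply Rlt_le, Rinv_0_lt_compat |]; lra. }
  pose proof (laurent_correction_le 1.570795 (PI / 2) (INR n) ltac:(split; lra) ltac:(lra)) as K.
  unfold laurent_correction at 1 in K. lra.
Qed.

Lemma shifted_sum_bound n : (237 <= n)%nat -> PI / INR n * shifted_self_sum n <= 5.8286 + INR n / 237.
Proof.
  intros Hn. pose proof (self_sums_ub n ltac:(lia)) as U.
  assert (0 <= self_sum n).
  { apply rsum_nonneg. intros. apply self_kernel_nonneg, COS_bound. }
  pose proof (harmonic_tail_le n Hn). pose proof harmonic_236_bounds.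
  pose proof PI_bounds. pose proof (INR_ge_237 n Hn).
  apply Rle_trans with (PI / INR n * (1 / 4 + INR n / PI * harmonic (n - 1) + (INR n - 1) / 4)).
  - apply Rmult_le_compat_l; [apply Rlt_le, Rdiv_lt_0_compat |]; lra.
  - replace (PI / INR n * (1 / 4 + INR n / PI * harmonic (n - 1) + (INR n - 1) / 4))
      with (harmonic (n - 1) + PI / 4) by (field; lra).
    lra.
Qed.

Lemma self_kernel_cos_decr a b : 0 < a <= b -> b <= PI -> self_kernel (cos b) <= self_kernel (cos a).
Proof.
  intros Ha Hb. pose proof PI_RGT_0. apply self_kernel_le.
  - apply cos_decr_1; lra.
  - apply cos_lt_1. lra.
Qed.

Lemma self_kernel_cos_incr a b : PI <= a <= b -> b < 2 * PI -> self_kernel (cos a) <= self_kernel (cos b).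
Proof.
  intros Ha Hb. pose proof PI_RGT_0. apply self_kernel_le.
  - apply cos_incr_1; lra.
  - apply cos_lt_1. lra.
Qed.

Lemma angle_frac_le n a b : (0 < n)%nat -> (a <= b)%nat -> PI * INR a / INR n <= PI * INR b / INR n.
Proof.
  intros Hn Hab. assert (0 < INR n) by (apply lt_0_INR; lia). pose proof PI_RGT_0.
  apply Rmult_le_compat_r; [apply Rlt_le, Rinv_0_lt_compat; lra |].
  apply Rmult_le_compat_l; [lra | now apply le_INR].
Qed.

Lemma angle_frac_le_PI n a : (0 < n)%nat -> (a <= n)%nat -> PI * INR a / INR n <= PI.
Proof.
  intros Hn Ha. replace PI with (PI * INR n / INR n) at 2 by (field; apply not_0_INR; lia).
  now apply angle_frac_le.
Qed.

Lemma angle_frac_ge_PI n a : (0 < n)%nat -> (n <= a)%nat -> PI <= PI * INR a / INR n.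
Proof.
  intros Hn Ha. replace PI with (PI * INR n / INR n) at 1 by (field; apply not_0_INR; lia).
  now apply angle_frac_le.
Qed.

Lemma angle_frac_lt_2PI n a : (0 < n)%nat -> (a < 2 * n)%nat -> PI * INR a / INR n < 2 * PI.
Proof.
  intros Hn Ha. assert (0 < INR n) by (apply lt_0_INR; lia). pose proof PI_RGT_0.
  apply lt_INR in Ha. rewrite mult_INR in Ha. simpl INR in Ha.
  apply (Rmult_lt_reg_r (INR n)); [lra |]. field_simplify; nra.
Qed.

Lemma angle_frac_succ n a : (0 < n)%nat -> PI * INR a / INR n + PI / INR n = PI * INR (S a) / INR n.
Proof. intros Hn. rewrite S_INR. field. apply not_0_INR. lia. Qed.

Lemma vertex_angle n l b : (0 < n)%nat -> 2 * PI * INR l / INR n + b = PI * INR (2 * l) / INR n + b.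
Proof. intros Hn. rewrite mult_INR. simpl INR. field. apply not_0_INR. lia. Qed.

Lemma shifted_nearest_term_ge n : (1 <= n)%nat -> INR n / (2 * PI) <= self_kernel (cos (PI / INR n)).
Proof.
  intros Hn. assert (HnR : 1 <= INR n) by (apply (le_INR 1); lia). pose proof PI_RGT_0.
  assert (Ha : 0 < PI / INR n <= PI).
  { split; [apply Rdiv_lt_0_compat; lra |].
    apply (Rmult_le_reg_r (INR n)); [lra |]. field_simplify; nra. }
  rewrite self_kernel_cos by lra.
  pose proof (sin_lt_x (PI / INR n / 2) ltac:(lra)). assert (0 < sin (PI / INR n / 2)) by (apply sin_gt_0; lra).
  replace (INR n / (2 * PI)) with (/ (4 * (PI / INR n / 2))) by (field; lra).
  apply Rinv_le_contravar; lra.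
Qed.

Lemma nearest_term_le n : (2 <= n)%nat -> self_kernel (cos (2 * (PI / INR n))) <= (INR n / PI + 1 / 2) / 4.
Proof.
  intros Hn. assert (HnR : 2 <= INR n) by (apply (le_INR 2); lia). pose proof PI_bounds.
  assert (Ha : 0 < PI / INR n <= 1.6).
  { split; [apply Rdiv_lt_0_compat; lra |].
    apply (Rmult_le_reg_r (INR n)); [lra |]. field_simplify; lra. }
  rewrite self_kernel_cos by lra. replace (2 * (PI / INR n) / 2) with (PI / INR n) by lra.
  pose proof (inv_sin_le (PI / INR n) Ha). assert (0 < sin (PI / INR n)) by (apply sin_gt_0; lra).
  replace (INR n / PI) with (/ (PI / INR n)) by (field; lra). rewrite Rinv_mult. lra.
Qed.

Lemma rsum_pairing_lb (t s : nat -> R) n m : (0 < m < n)%nat -> s O = 0 -> 0 <= t m ->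
  (forall l, (l < m)%nat -> s (S l) <= t l) -> (forall l, (m < l < n)%nat -> s l <= t l) ->
  t O - s 1%nat <= rsum t n - rsum s n.
Proof.
  intros Hm Hs0 Htm Hfirst Hsecond.
  assert (Et : rsum t n = t O + rsum (fun l => t (S l)) (m - 1) + t m
                          + rsum (fun l => t (S m + l)%nat) (n - S m)).
  { replace n with (S m + (n - S m))%nat at 1 by lia. rewrite rsum_split. cbn [rsum].
    replace m with (S (m - 1)) at 1 by lia. rewrite rsum_succ_l. ring. }
  assert (Es : rsum s n = s O + s 1%nat + rsum (fun l => s (S (S l))) (m - 1)
                          + rsum (fun l => s (S m + l)%nat) (n - S m)).
  { replace n with (S m + (n - S m))%nat at 1 by lia. rewrite rsum_split, rsum_succ_l.
    replace m with (S (m - 1)) at 1 by lia. rewrite rsum_succ_l. ring. }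
  assert (rsum (fun l => s (S (S l))) (m - 1) <= rsum (fun l => t (S l)) (m - 1))
    by (apply rsum_le; intros l Hl; apply Hfirst; lia).
  assert (rsum (fun l => s (S m + l)%nat) (n - S m) <= rsum (fun l => t (S m + l)%nat) (n - S m))
    by (apply rsum_le; intros l Hl; apply Hsecond; lia).
  lra.
Qed.

(* With [t_l] and [s_l] the terms of [shifted_self_sum] and [self_sum], pair [s_(l+1)] with
   [t_l] on the half [0, pi] of the circle and [s_l] with [t_l] on the other half, where the
   kernel decreases, resp. increases, with the angle; only [t_0 - s_1], about [n / (4 pi)],
   survives. *)
Lemma shifted_minus_self_ge n : (237 <= n)%nat -> INR n / (4 * PI) - 1 / 8 <= shifted_self_sum n - self_sum n.
Proof.
  intros Hn. assert (Hn0 : (0 < n)%nat) by lia.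
  assert (HnR : 0 < INR n) by (apply lt_0_INR; lia). pose proof PI_bounds.
  set (t := fun l => self_kernel (cos (PI * INR (2 * l) / INR n + PI / INR n))).
  set (s := fun l => self_kernel (cos (PI * INR (2 * l) / INR n + 0))).
  assert (ET : shifted_self_sum n = rsum t n)
    by (apply rsum_ext; intros; unfold t; now rewrite vertex_angle by lia).
  assert (ES : self_sum n = rsum s n)
    by (apply rsum_ext; intros; unfold s; now rewrite vertex_angle by lia).
  set (m := (n / 2)%nat).
  assert (Hm : (2 * m <= n <= 2 * m + 1)%nat)
    by (pose proof (Nat.div_mod n 2); pose proof (Nat.mod_upper_bound n 2); unfold m; lia).
  assert (Hpair : t O - s 1%nat <= rsum t n - rsum s n).
  { apply (rsum_pairing_lb t s n m); [lia | | | |].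
    - unfold s. simpl INR. rewrite Rmult_0_r, Rdiv_0_l, Rplus_0_r, cos_0. apply self_kernel_1.
    - apply self_kernel_nonneg, COS_bound.
    - intros l Hl. unfold s, t. rewrite angle_frac_succ, Rplus_0_r by lia. apply self_kernel_cos_decr.
      + split; [| apply angle_frac_le; lia].
        apply Rdiv_lt_0_compat; [apply Rmult_lt_0_compat; [lra | apply lt_0_INR; lia] | lra].
      + apply angle_frac_le_PI; lia.
    - intros l Hl. unfold s, t. rewrite angle_frac_succ, Rplus_0_r by lia. apply self_kernel_cos_incr.
      + split; [apply angle_frac_ge_PI | apply angle_frac_le]; lia.
      + apply angle_frac_lt_2PI; lia. }
  assert (Ht0 : INR n / (2 * PI) <= t 0%nat).
  { unfold t. replace (PI * INR (2 * 0) / INR n + PI / INR n) with (PI / INR n) by (simpl INR; field; lra).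
    apply shifted_nearest_term_ge. lia. }
  assert (Hs1 : s 1%nat <= (INR n / PI + 1 / 2) / 4).
  { unfold s. replace (PI * INR (2 * 1) / INR n + 0) with (2 * (PI / INR n)) by (simpl INR; field; lra).
    apply nearest_term_le. lia. }
  rewrite ET, ES. replace (INR n / (4 * PI)) with (INR n / (2 * PI) - (INR n / PI) / 4) by (field; lra). lra.
Qed.

Lemma shifted_self_sum_gt n : (237 <= n)%nat -> self_sum n < shifted_self_sum n /\ INR n < shifted_self_sum n.
Proof.
  intros Hn. pose proof (self_sums_gt n Hn). pose proof (shifted_minus_self_ge n Hn).
  pose proof (INR_div_4PI_ge_18 n Hn). lra.
Qed.

(** * Interaction between the two polygons *)

Lemma pair_dist_sq_pos r c : 0 < r -> c < 1 -> 0 < 1 + r ^ 2 - 2 * r * c.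
Proof.
  intros Hr Hc. replace (1 + r ^ 2 - 2 * r * c) with ((1 - r) ^ 2 + 2 * r * (1 - c)) by ring.
  pose proof (pow2_ge_0 (1 - r)). assert (0 < 2 * r * (1 - c)) by (apply Rmult_lt_0_compat; lra). lra.
Qed.

Lemma inner_kernel_le r c : 0 < r <= 1 -> c < 1 -> inner_kernel r c <= self_kernel c / r ^ 2.
Proof.
  intros Hr Hc. pose proof (pair_dist_sq_pos r c ltac:(lra) Hc) as HD.
  set (sD := sqrt (1 + r ^ 2 - 2 * r * c)).
  assert (HsD : 0 < sD) by (apply sqrt_lt_R0; auto).
  assert (0 < r ^ 2) by nra.
  assert (0 <= self_kernel c / r ^ 2) by (apply Rmult_le_pos; [apply self_kernel_nonneg; lra | apply Rlt_le, Rinv_0_lt_compat; auto]).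
  unfold inner_kernel. fold sD.
  destruct (Rle_dec r c) as [Hrc | Hrc].
  { assert ((r - c) / sD ^ 3 <= 0) by (unfold Rdiv; apply Rmult_le_0_r; [lra | apply Rlt_le, Rinv_0_lt_compat, pow_lt; auto]).
    lra. }
  set (q := sqrt (2 - 2 * c)). assert (Hq : 0 < q) by (apply sqrt_lt_R0; lra).
  assert (Hsr : r <= sqrt r) by (rewrite <- (sqrt_pow2 r) at 1 by lra; apply sqrt_le_1_alt; nra).
  (* [1 + r^2 - 2 r c >= r (2 - 2c)], hence [sD >= sqrt r q] and [sD^3 >= r^2 q^3] *)
  assert (Hdist : sqrt r * q <= sD) by (unfold q, sD; rewrite <- sqrt_mult by lra; apply sqrt_le_1_alt; nra).
  assert (Hcube : r ^ 2 * q ^ 3 <= sD ^ 3).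
  { apply Rle_trans with ((sqrt r * q) ^ 3).
    - replace ((sqrt r * q) ^ 3) with (sqrt r ^ 2 * sqrt r * q ^ 3) by ring. rewrite pow2_sqrt by lra.
      assert (0 < q ^ 3) by (apply pow_lt; auto).
      replace (r ^ 2) with (r * r) by ring. apply Rmult_le_compat_r; [lra |]. apply Rmult_le_compat_l; lra.
    - apply pow_incr. split; [apply Rmult_le_pos; lra | auto]. }
  assert (Eself : self_kernel c / r ^ 2 = (1 - c) / (r ^ 2 * q ^ 3)).
  { unfold self_kernel. fold q. field. split; lra. }
  rewrite Eself. assert (0 < q ^ 3) by (apply pow_lt; auto).
  apply Rle_trans with ((r - c) / (r ^ 2 * q ^ 3)).
  - unfold Rdiv. apply Rmult_le_compat_l; [lra |]. apply Rinv_le_contravar; auto. nra.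
  - unfold Rdiv. apply Rmult_le_compat_r; [apply Rlt_le, Rinv_0_lt_compat; nra | lra].
Qed.

(* [self_kernel c <= outer_kernel r c], squared and written in [x = 1 - c] and [d = 1 - r]. *)
Lemma outer_kernel_poly_ineq x d : 0 < x <= 2 -> 0 <= d <= 1 / 50 -> d ^ 4 <= x ->
  (d ^ 2 + 2 * (1 - d) * x) ^ 3 <= 8 * x * (x + d - d * x) ^ 2.
Proof.
  intros Hx Hd H4.
  assert (E : 8 * x * (x + d - d * x) ^ 2 - (d ^ 2 + 2 * (1 - d) * x) ^ 3 =
     x ^ 2 * d * (16 - 28 * d - 16 * x * d - 12 * d ^ 3) + 8 * x ^ 3 * d + x * d ^ 2 * (8 - 6 * d ^ 2)
     + 24 * x ^ 2 * d ^ 3 + 8 * x ^ 3 * d ^ 3 + 6 * x * d ^ 5 - d ^ 6) by ring.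
  assert (0 <= x ^ 2 * d * (16 - 28 * d - 16 * x * d - 12 * d ^ 3)).
  { apply Rmult_le_pos; [apply Rmult_le_pos; nra |]. assert (d ^ 3 <= 1) by (simpl; nra). nra. }
  assert (0 <= 8 * x ^ 3 * d + 24 * x ^ 2 * d ^ 3 + 8 * x ^ 3 * d ^ 3 + 6 * x * d ^ 5).
  { assert (0 <= x ^ 3) by (apply pow_le; lra). assert (0 <= d ^ 3) by (apply pow_le; lra).
    assert (0 <= d ^ 5) by (apply pow_le; lra). assert (0 <= x ^ 2) by nra. nra. }
  assert (d ^ 6 <= x * d ^ 2 * (8 - 6 * d ^ 2)).
  { replace (d ^ 6) with (d ^ 4 * d ^ 2) by ring. assert (0 <= d ^ 2 <= 1) by (split; nra).
    assert (d ^ 4 * d ^ 2 <= x * d ^ 2) by (apply Rmult_le_compat_r; lra). nra. }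
  lra.
Qed.

Lemma outer_kernel_ge r c : 0 <= 1 - r <= 1 / 50 -> -1 <= c < 1 -> (1 - r) ^ 4 <= 1 - c ->
  self_kernel c <= outer_kernel r c.
Proof.
  intros Hd Hc H4. set (d := 1 - r) in *. set (x := 1 - c) in *.
  assert (Hr : r = 1 - d) by (unfold d; ring). assert (Hcx : c = 1 - x) by (unfold x; ring).
  pose proof (pair_dist_sq_pos r c ltac:(lra) ltac:(lra)) as HD.
  set (D := 1 + r ^ 2 - 2 * r * c) in *.
  assert (ED : D = d ^ 2 + 2 * (1 - d) * x) by (unfold D; rewrite Hr, Hcx; ring).
  assert (EN : 1 - r * c = x + d - d * x) by (rewrite Hr, Hcx; ring).
  set (sD := sqrt D). assert (HsD : 0 < sD) by (apply sqrt_lt_R0; auto).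
  set (q := sqrt (2 - 2 * c)). assert (Hq : 0 < q) by (apply sqrt_lt_R0; lra).
  assert (Hq2 : q ^ 2 = 2 * x) by (unfold q; rewrite pow2_sqrt by lra; unfold x; ring).
  assert (HsD2 : sD ^ 2 = D) by (unfold sD; rewrite pow2_sqrt by lra; auto).
  pose proof (outer_kernel_poly_ineq x d ltac:(lra) Hd H4) as HP. rewrite <- ED, <- EN in HP.
  assert (HN : 0 < 1 - r * c) by (rewrite EN; nra).
  assert (HAB : x * sD ^ 3 <= (1 - r * c) * q ^ 3).
  { assert (0 <= (1 - r * c) * q ^ 3) by (apply Rmult_le_pos; [lra | apply pow_le; lra]).
    assert (0 <= x * sD ^ 3) by (apply Rmult_le_pos; [lra | apply pow_le; lra]).
    assert ((x * sD ^ 3) ^ 2 <= ((1 - r * c) * q ^ 3) ^ 2).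
    { replace ((x * sD ^ 3) ^ 2) with (x ^ 2 * (sD ^ 2) ^ 3) by ring.
      replace (((1 - r * c) * q ^ 3) ^ 2) with ((1 - r * c) ^ 2 * (q ^ 2) ^ 3) by ring.
      rewrite HsD2, Hq2. replace ((1 - r * c) ^ 2 * (2 * x) ^ 3) with (x ^ 2 * (8 * x * (1 - r * c) ^ 2)) by ring.
      apply Rmult_le_compat_l; [nra | lra]. }
    nra. }
  unfold self_kernel, outer_kernel. fold q x D sD.
  assert (0 < q ^ 3) by (apply pow_lt; auto). assert (0 < sD ^ 3) by (apply pow_lt; auto).
  apply (Rmult_le_reg_r (q ^ 3 * sD ^ 3)); [nra |].
  replace (x / q ^ 3 * (q ^ 3 * sD ^ 3)) with (x * sD ^ 3) by (field; lra).
  replace ((1 - r * c) / sD ^ 3 * (q ^ 3 * sD ^ 3)) with ((1 - r * c) * q ^ 3) by (field; lra).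
  auto.
Qed.

Lemma shifted_vertex_bounds n l : (2 <= n)%nat -> (l < n)%nat ->
  PI / INR n <= 2 * PI * INR l / INR n + PI / INR n <= 2 * PI - PI / INR n.
Proof.
  intros Hn Hl. assert (HnR : 0 < INR n) by (apply lt_0_INR; lia). pose proof PI_RGT_0.
  assert (INR l + 1 <= INR n) by (rewrite <- S_INR; apply le_INR; lia).
  pose proof (pos_INR l). split.
  - assert (0 <= 2 * PI * INR l / INR n) by (apply Rmult_le_pos; [nra | apply Rlt_le, Rinv_0_lt_compat; lra]). lra.
  - apply (Rmult_le_reg_r (INR n)); [lra |]. field_simplify; nra.
Qed.

Lemma cos_shifted_vertex_lt_1 n l : (2 <= n)%nat -> (l < n)%nat -> cos (2 * PI * INR l / INR n + PI / INR n) < 1.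
Proof.
  intros Hn Hl. pose proof (shifted_vertex_bounds n l Hn Hl).
  assert (0 < PI / INR n) by (apply Rdiv_lt_0_compat; [apply PI_RGT_0 | apply lt_0_INR; lia]).
  apply cos_lt_1. lra.
Qed.

Lemma cos_shifted_vertex_le n l : (2 <= n)%nat -> (l < n)%nat ->
  cos (2 * PI * INR l / INR n + PI / INR n) <= cos (PI / INR n).
Proof.
  intros Hn Hl. pose proof (shifted_vertex_bounds n l Hn Hl).
  set (b := 2 * PI * INR l / INR n + PI / INR n) in *.
  assert (0 < PI / INR n <= PI).
  { split; [apply Rdiv_lt_0_compat; [apply PI_RGT_0 | apply lt_0_INR; lia] |].
    apply (Rmult_le_reg_r (INR n)); [apply lt_0_INR; lia |].
    assert (2 <= INR n) by (apply (le_INR 2); lia). pose proof PI_RGT_0. field_simplify; nra. }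
  destruct (Rle_dec b PI).
  - apply cos_decr_1; lra.
  - replace (cos b) with (cos (2 * PI - b)).
    + apply cos_decr_1; lra.
    + replace (2 * PI - b) with (- b + 2 * PI) by ring. now rewrite cos_plus_2PI, cos_neg.
Qed.

Lemma outer_sum_ge n r : (2 <= n)%nat -> 0 <= 1 - r <= 1 / 50 -> (1 - r) ^ 4 <= 1 - cos (PI / INR n) ->
  shifted_self_sum n <= outer_sum n r.
Proof.
  intros Hn Hr H4. apply rsum_le. intros l Hl.
  pose proof (cos_shifted_vertex_le n l Hn Hl). pose proof (cos_shifted_vertex_lt_1 n l Hn Hl).
  pose proof (COS_bound (2 * PI * INR l / INR n + PI / INR n)).
  apply outer_kernel_ge; lra.
Qed.

Lemma rsum_ends f n : (2 <= n)%nat -> rsum f n = f O + rsum (fun l => f (S l)) (n - 2) + f (n - 1)%nat.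
Proof.
  intros Hn. replace n with (S (S (n - 2))) at 1 by lia. rewrite rsum_succ_l.
  cbn [rsum]. replace (S (n - 2)) with (n - 1)%nat by lia. ring.
Qed.

(* The two vertices of the outer polygon nearest to an inner body are kept apart; every
   other term is dominated by the corresponding term of [shifted_self_sum / r^2]. *)
Lemma inner_sum_le n r : (2 <= n)%nat -> 0 < r <= 1 ->
  inner_sum n r <= shifted_self_sum n / r ^ 2 + 2 * inner_kernel r (cos (PI / INR n)).
Proof.
  intros Hn Hr. assert (HnR : 0 < INR n) by (apply lt_0_INR; lia).
  set (v := fun l => 2 * PI * INR l / INR n + PI / INR n).
  assert (Hv0 : cos (v O) = cos (PI / INR n)) by (unfold v; simpl INR; f_equal; field; lra).
  assert (Hvlast : cos (v (n - 1)%nat) = cos (PI / INR n)).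
  { unfold v. rewrite minus_INR by lia. simpl INR.
    replace (2 * PI * (INR n - 1) / INR n + PI / INR n) with (- (PI / INR n) + 2 * PI) by (field; lra).
    now rewrite cos_plus_2PI, cos_neg. }
  unfold inner_sum, shifted_self_sum, polygon_sum. fold v.
  rewrite (rsum_ends (fun l => inner_kernel r (cos (v l)))), (rsum_ends (fun l => self_kernel (cos (v l)))) by auto.
  rewrite Hv0, Hvlast.
  assert (Hmid : rsum (fun l => inner_kernel r (cos (v (S l)))) (n - 2)
                 <= rsum (fun l => self_kernel (cos (v (S l)))) (n - 2) / r ^ 2).
  { unfold Rdiv. rewrite Rmult_comm, <- rsum_scal_l. apply rsum_le. intros l Hl.
    rewrite Rmult_comm. apply inner_kernel_le; auto. apply cos_shifted_vertex_lt_1; lia. }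
  assert (0 <= self_kernel (cos (PI / INR n))) by apply self_kernel_nonneg, COS_bound.
  assert (0 < / r ^ 2) by (apply Rinv_0_lt_compat; nra).
  unfold Rdiv in *. nra.
Qed.

Lemma inner_kernel_nearest a k : 0 < k <= sin a ->
  inner_kernel (cos a - k) (cos a) <= - k / (3 * sin a ^ 3).
Proof.
  intros Hk. pose proof (sin2_cos2 a) as Hsc. unfold Rsqr in Hsc.
  unfold inner_kernel. set (s := sin a) in *. set (c := cos a) in *.
  replace (1 + (c - k) ^ 2 - 2 * (c - k) * c) with (k ^ 2 + s ^ 2) by nra.
  replace (c - k - c) with (- k) by ring.
  assert (Hd : 0 < sqrt (k ^ 2 + s ^ 2)) by (apply sqrt_lt_R0; nra).
  assert (sqrt (k ^ 2 + s ^ 2) <= 71 / 50 * s)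
    by (rewrite <- (sqrt_pow2 (71 / 50 * s)) by lra; apply sqrt_le_1_alt; nra).
  assert (sqrt (k ^ 2 + s ^ 2) ^ 3 <= 3 * s ^ 3).
  { apply Rle_trans with ((71 / 50 * s) ^ 3); [apply pow_incr; lra |].
    assert (0 < s ^ 3) by (apply pow_lt; lra). lra. }
  assert (0 < sqrt (k ^ 2 + s ^ 2) ^ 3) by (apply pow_lt; lra).
  unfold Rdiv. rewrite !Ropp_mult_distr_l_reverse. apply Ropp_le_contravar.
  apply Rmult_le_compat_l; [lra |]. apply Rinv_le_contravar; auto.
Qed.

(** * The radius of the inner polygon *)

Lemma ex_derive_rsum (f : nat -> R -> R) k x : (forall l, (l < k)%nat -> ex_derive (f l) x) ->
  ex_derive (fun r => rsum (fun l => f l r) k) x.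
Proof.
  induction k as [|k IH]; intros H; simpl.
  - apply ex_derive_const.
  - apply (ex_derive_plus (fun r => rsum (fun l => f l r) k) (f k)); [apply IH; intros |]; apply H; lia.
Qed.

Lemma ex_derive_kernels c x : c < 1 -> 0 < x ->
  ex_derive (fun r => inner_kernel r c) x /\ ex_derive (fun r => outer_kernel r c) x.
Proof.
  intros Hc Hx. pose proof (pair_dist_sq_pos x c Hx Hc).
  assert (0 < sqrt (1 + x ^ 2 - 2 * x * c)) by (apply sqrt_lt_R0; auto).
  unfold inner_kernel, outer_kernel.
  assert (E : 1 + x * (x * 1) + - (2 * x * c) = 1 + x ^ 2 - 2 * x * c) by ring.
  split; auto_derive; rewrite E; repeat split; try lra.
  all: apply Rgt_not_eq; repeat apply Rmult_lt_0_compat; lra.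
Qed.

Lemma ex_derive_polygon_sums n x : (2 <= n)%nat -> 0 < x ->
  ex_derive (inner_sum n) x /\ ex_derive (outer_sum n) x.
Proof.
  intros Hn Hx. split; apply ex_derive_rsum; intros l Hl;
    apply (ex_derive_kernels _ x (cos_shifted_vertex_lt_1 n l Hn Hl) Hx).
Qed.

(* [total_mass_drift n r = 0] is the hypothesis of [perverse_mass_pair]: the total mass is
   then constant along the line of solutions of [linear_balance]. *)
Definition total_mass_drift (n : nat) (r : R) : R :=
  (INR n - self_sum n) ^ 2 - (r ^ 2 * inner_sum n r - INR n) * (outer_sum n r - INR n).

Lemma total_mass_drift_continuous n x : (2 <= n)%nat -> 0 < x -> continuity_pt (total_mass_drift n) x.
Proof.
  intros Hn Hx. destruct (ex_derive_polygon_sums n x Hn Hx).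
  apply continuity_pt_filterlim, (ex_derive_continuous (total_mass_drift n) x).
  unfold total_mass_drift. auto_derive. auto.
Qed.

Lemma radius_numerics N Y : 237 <= N -> 0 <= Y <= 5.8286 + N / 237 ->
  PI / N * (1 / 2 + 3 * Y) <= 1 / 3 /\ 3 * (PI / N) * (1 / 2 + 3 * Y) * Y < N / (4 * PI) - 1 / 8.
Proof.
  intros HN HY. pose proof PI_bounds.
  assert (PI ^ 2 <= 9.87) by nra.
  set (Yu := 5.8286 + N / 237) in *.
  assert (HYY : (1 / 2 + 3 * Y) * Y <= (1 / 2 + 3 * Yu) * Yu) by (apply Rmult_le_compat; lra).
  split.
  - apply (Rmult_le_reg_r N); [lra |].
    replace (PI / N * (1 / 2 + 3 * Y) * N) with (PI * (1 / 2 + 3 * Y)) by (field; lra).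
    unfold Yu in HY. nra.
  - apply (Rmult_lt_reg_r (4 * PI * N)); [nra |].
    replace (3 * (PI / N) * (1 / 2 + 3 * Y) * Y * (4 * PI * N)) with (12 * PI ^ 2 * ((1 / 2 + 3 * Y) * Y))
      by (field; lra).
    replace ((N / (4 * PI) - 1 / 8) * (4 * PI * N)) with (N ^ 2 - PI * N / 2) by (field; lra).
    assert (12 * PI ^ 2 * ((1 / 2 + 3 * Y) * Y) <= 12 * 9.87 * ((1 / 2 + 3 * Yu) * Yu)).
    { apply Rmult_le_compat; [nra | apply Rmult_le_pos; lra | lra | lra]. }
    assert (12 * 9.87 * ((1 / 2 + 3 * Yu) * Yu) + 3.1416 * N / 2 < N ^ 2) by (unfold Yu; nra).
    nra.
Qed.

(* Slightly inside the apothem [cos (pi/n)]; the offset is chosen so that each of the two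
   nearest outer vertices contributes at most [- shifted_self_sum n] to [inner_sum]
   ([inner_kernel_nearest]), which outweighs the rest ([inner_sum_le]). *)
Definition near_radius (n : nat) : R :=
  cos (PI / INR n) - 3 * sin (PI / INR n) ^ 3 * shifted_self_sum n.

Lemma near_radius_facts n : (237 <= n)%nat ->
  0 < 3 * sin (PI / INR n) ^ 3 * shifted_self_sum n <= sin (PI / INR n) /\
  0 < 1 - near_radius n <= 1 / 50 /\ (1 - near_radius n) ^ 4 <= 1 - cos (PI / INR n) /\
  self_sum n < (1 - 3 * (1 - near_radius n)) * shifted_self_sum n.
Proof.
  intros Hn. pose proof PI_bounds. pose proof (INR_ge_237 n Hn) as HN.
  pose proof (shifted_self_sum_gt n Hn) as [_ HTn]. pose proof (shifted_minus_self_ge n Hn).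
  pose proof (shifted_sum_bound n Hn) as HY.
  unfold near_radius. set (a := PI / INR n) in *.
  set (T := shifted_self_sum n) in *. set (S := self_sum n) in *.
  assert (Ha : 0 < a <= 3.1416 / 237).
  { unfold a. split; [apply Rdiv_lt_0_compat; lra |].
    apply Rle_trans with (3.1416 / INR n);
      unfold Rdiv; [apply Rmult_le_compat_r | apply Rmult_le_compat_l]; try lra.
    - apply Rlt_le, Rinv_0_lt_compat. lra.
    - apply Rinv_le_contravar; lra. }
  assert (Hsin : 0 < sin a <= a) by (split; [apply sin_gt_0 | apply Rlt_le, sin_lt_x]; lra).
  destruct (cos_taylor_bounds a ltac:(lra)) as [Hcos1 Hcos2].
  (* with [Y = a T], [1 - near_radius n <= a^2 (1/2 + 3 Y) <= a / 3] *)
  set (Y := a * T) in *.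
  assert (HT : 0 < T) by lra.
  destruct (radius_numerics (INR n) Y HN ltac:(split; [unfold Y; nra | exact HY])) as [NA NB].
  fold a in NA, NB.
  assert (Hk : 3 * sin a ^ 3 * T <= 3 * a ^ 2 * Y).
  { unfold Y. assert (sin a ^ 3 <= a ^ 3) by (apply pow_incr; lra). nra. }
  assert (Hk0 : 0 < 3 * sin a ^ 3 * T) by (assert (0 < sin a ^ 3) by (apply pow_lt; lra); nra).
  assert (Hdelta : 1 - (cos a - 3 * sin a ^ 3 * T) <= a * (a * (1 / 2 + 3 * Y))) by nra.
  assert (Hdelta' : a * (a * (1 / 2 + 3 * Y)) <= a / 3) by nra.
  pose proof (COS_bound a).
  split; [split; [lra |] |]; [| split; [split; lra |]; split].
  - replace (3 * sin a ^ 3 * T) with (sin a * (3 * sin a ^ 2 * T)) by ring.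
    assert (sin a ^ 2 <= a ^ 2) by (apply pow_incr; lra).
    assert (3 * sin a ^ 2 * T <= 1) by (unfold Y in NA; nra). nra.
  - apply Rle_trans with ((a / 3) ^ 4); [apply pow_incr; lra |].
    assert (a ^ 4 <= a ^ 2 / 100) by (replace (a ^ 4) with (a ^ 2 * a ^ 2) by ring; nra). lra.
  - assert (3 * (1 - (cos a - 3 * sin a ^ 3 * T)) * T <= 3 * a * (1 / 2 + 3 * Y) * Y) by (unfold Y in *; nra).
    lra.
Qed.

Lemma inner_sum_1 n : inner_sum n 1 = shifted_self_sum n.
Proof.
  apply polygon_sum_ext. intros x. unfold inner_kernel, self_kernel.
  now replace (1 + 1 ^ 2 - 2 * 1 * cos x) with (2 - 2 * cos x) by ring.
Qed.

Lemma outer_sum_1 n : outer_sum n 1 = shifted_self_sum n.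
Proof.
  apply polygon_sum_ext. intros x. unfold outer_kernel, self_kernel.
  now replace (1 + 1 ^ 2 - 2 * 1 * cos x) with (2 - 2 * cos x) by ring; rewrite Rmult_1_l.
Qed.

Lemma total_mass_drift_1_neg n : self_sum n < shifted_self_sum n ->
  2 * INR n < self_sum n + shifted_self_sum n -> total_mass_drift n 1 < 0.
Proof.
  intros HST Hsum. unfold total_mass_drift. rewrite inner_sum_1, outer_sum_1.
  replace ((INR n - self_sum n) ^ 2 - (1 ^ 2 * shifted_self_sum n - INR n) * (shifted_self_sum n - INR n))
    with (- ((shifted_self_sum n - self_sum n) * (self_sum n + shifted_self_sum n - 2 * INR n))) by ring.
  assert (0 < (shifted_self_sum n - self_sum n) * (self_sum n + shifted_self_sum n - 2 * INR n))
    by (apply Rmult_lt_0_compat; lra).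
  lra.
Qed.

Lemma total_mass_drift_pos n r : (0 < n)%nat -> inner_sum n r <= 0 -> INR n < outer_sum n r ->
  0 < total_mass_drift n r.
Proof.
  intros Hn HU HW. pose proof (lt_0_INR n Hn). assert (r ^ 2 * inner_sum n r <= 0) by (pose proof (pow2_ge_0 r); nra).
  assert (0 < (INR n - r ^ 2 * inner_sum n r) * (outer_sum n r - INR n)) by (apply Rmult_lt_0_compat; lra).
  pose proof (pow2_ge_0 (INR n - self_sum n)).
  unfold total_mass_drift. lra.
Qed.

Lemma inner_sum_near_radius_nonpos n : (237 <= n)%nat -> inner_sum n (near_radius n) <= 0.
Proof.
  intros Hn. destruct (near_radius_facts n Hn) as (Hk & Hrb & _ & _).
  pose proof (shifted_self_sum_gt n Hn) as [_ HT].
  pose proof (inner_sum_le n (near_radius n) ltac:(lia) ltac:(lra)) as HU.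
  pose proof (inner_kernel_nearest (PI / INR n) _ Hk) as Hnear. fold (near_radius n) in Hnear.
  replace (- (3 * sin (PI / INR n) ^ 3 * shifted_self_sum n) / (3 * sin (PI / INR n) ^ 3))
    with (- shifted_self_sum n) in Hnear by (field; lra).
  assert (Hrb2 : 1 / 2 <= near_radius n ^ 2) by nra. pose proof (pos_INR n).
  assert (shifted_self_sum n / near_radius n ^ 2 <= 2 * shifted_self_sum n).
  { apply (Rmult_le_reg_r (near_radius n ^ 2)); [lra |]. field_simplify; nra. }
  lra.
Qed.

Lemma total_mass_drift_root n : (237 <= n)%nat ->
  exists z, 0 < z < 1 /\ total_mass_drift n z = 0 /\
    self_sum n < z ^ 3 * outer_sum n z /\ self_sum n < outer_sum n z.
Proof.
  intros Hn. assert (Hn2 : (2 <= n)%nat) by lia.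
  destruct (near_radius_facts n Hn) as (_ & Hrb & Hrb4 & Hself).
  pose proof (shifted_self_sum_gt n Hn) as [HST HT].
  pose proof (total_mass_drift_1_neg n HST (self_sums_gt n Hn)) as Hat1.
  pose proof (total_mass_drift_pos n (near_radius n) ltac:(lia) (inner_sum_near_radius_nonpos n Hn)
                (Rlt_le_trans _ _ _ HT (outer_sum_ge n (near_radius n) Hn2 ltac:(split; lra) Hrb4))) as Hatrb.
  set (rb := near_radius n) in *.
  destruct (IVT_interv (fun r => - total_mass_drift n r) rb 1) as (z & Hz & Hz0); [| lra | lra | lra |].
  { intros x Hx. apply continuity_pt_opp, total_mass_drift_continuous; [exact Hn2 | lra]. }
  assert (Hz1 : z <> 1) by (intros ->; lra).
  exists z. split; [lra |]. split; [lra |].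
  assert (HW : shifted_self_sum n <= outer_sum n z).
  { apply outer_sum_ge; [exact Hn2 | split; lra |].
    apply Rle_trans with ((1 - rb) ^ 4); [apply pow_incr |]; lra. }
  assert (1 - 3 * (1 - rb) <= z ^ 3).
  { assert (0 <= (1 - z) ^ 2 * (2 + z)) by (apply Rmult_le_pos; [apply pow2_ge_0 | lra]). nra. }
  pose proof (pos_INR n).
  assert ((1 - 3 * (1 - rb)) * shifted_self_sum n <= z ^ 3 * outer_sum n z) by (apply Rmult_le_compat; lra).
  lra.
Qed.

Theorem proposition5 (n : nat) (hn : (237 <= n)%nat) :
  exists rho1 rho2 : R, 0 < rho1 /\ rho1 <= rho2 /\
    really_perverse n (two_ngon_config n rho1 rho2).
Proof.
  assert (Hn : (2 <= n)%nat) by lia.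
  destruct (total_mass_drift_root n hn) as (z & Hz & Hdrift & Hcube & Houter).
  assert (z ^ 3 < 1) by (assert (0 < z * z < 1) by nra; simpl; nra).
  destruct (perverse_mass_pair n (self_sum n) (z ^ 2 * inner_sum n z) (outer_sum n z) (z ^ 3))
    as (m & m' & Hne & Hpos & Hpos' & Htotal & Hbal & Hbal'); try assumption.
  { unfold total_mass_drift in Hdrift. lra. }
  exists z, 1. split; [lra |]. split; [lra |].
  exists m, m'. do 4 (split; [assumption |]).
  split; [apply two_ngon_mass_moment; lia |]. split; [apply two_ngon_mass_moment; lia |].
  split; apply two_ngon_relative_equilibrium; lia || lra || assumption.
Qed.
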